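(* Let $M\ge1$ and $q\in[q_G,M+1]$. The sequence $\alpha(q)$ is irreducible if and only if $q\notin(q_L(\mathbf b),q_R(\mathbf b)]$ for every fundamental word $\mathbf b\in\mathcal A_M$.
   Context: Order and word operations. $\Omega_M=\{0,\dots,M\}^{\mathbb N}$, with lexicographic order; words are compared via $\mathbf c\prec\mathbf d$ iff $\mathbf c0^\infty\prec\mathbf d0^\infty$. $\sigma$ is the left shift. For a word $c_1\dots c_k$: - if $c_k<M$, then $c_1\dots c_k^+=c_1\dots c_{k-1}(c_k+1)$; - if $c_k>0$, then $c_1\dots c_k^-=c_1\dots c_{k-1}(c_k-1)$; - $\overline{c_1\dots c_k}=(M-c_1)\dots(M-c_k)$, and $\overline{(c_i)}=(M-c_i)$ for sequences. Quasi-greedy expansion. For $q\in(1,M+1]$, $\alpha(q)$ is the lexicographically largest $(a_i)\in\Omega_M$ not ending in $0^\infty$ with $\sum a_iq^{-i}=1$. Irreducible sequences. Let $\mathbf V=\{(c_i)\in\Omega_M:\overline{(c_i)}\preceq\sigma^n((c_i))\preceq(c_i)\ \forall n\ge0\}$. A sequence $(a_i)\in\mathbf V$ is irreducible if for every $j\in\mathbb N$: whenever $a_j>0$ and $(a_1\dots a_j^-)^\infty\in\mathbf V$, we have $a_1\dots a_j(\overline{a_1\dots a_j}^+)^\infty\prec(a_i)$. (In particular, an irreducible sequence lies in $\mathbf V$.) Fundamental words. A word $a_1\dots a_m$ ($m\ge2$) is fundamental if $\overline{a_1\dots a_{m-i}}\preceq a_{i+1}\dots a_m\prec a_1\dots a_{m-i}$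 for $1\le i<m$. When $M\ge2$, a letter $a_1$ is fundamental if $M-a_1\le a_1<M$. $\mathcal A_M$ denotes the set of fundamental words. For $\mathbf b\in\mathcal A_M$, $q_L(\mathbf b),q_R(\mathbf b)$ are given by $\alpha(q_L(\mathbf b))=\mathbf b^\infty$ and $\alpha(q_R(\mathbf b))=\mathbf b^+(\overline{\mathbf b})^\infty$. The base $q_G$. It is defined by $\alpha(q_G)=k^\infty$ if $M=2k$, and $\alpha(q_G)=((k+1)k)^\infty$ if $M=2k+1$. *)

From Stdlib Require Import Reals Lra Lia Arith List.
Import ListNotations.
Open Scope R_scope.

(* A sequence (c_i)_{i>=1} is represented by c : nat -> nat with c n = c_{n+1}. *)
Definition in_Omega (M : nat) (c : nat -> nat) : Prop := forall i, (c i <= M)%nat.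

Definition lex_lt (c d : nat -> nat) : Prop :=
  exists n, (forall i, (i < n)%nat -> c i = d i) /\ (c n < d n)%nat.
Definition lex_le (c d : nat -> nat) : Prop := lex_lt c d \/ (forall i, c i = d i).

Definition shiftn (n : nat) (c : nat -> nat) : nat -> nat := fun i => c (n + i)%nat.
Definition flip (M : nat) (c : nat -> nat) : nat -> nat := fun i => (M - c i)%nat.

Definition ends_in_zero (c : nat -> nat) : Prop :=
  exists N, forall i, (N <= i)%nat -> c i = 0%nat.

(* a = alpha(q): the quasi-greedy expansion of 1 in base q, q in (1, M+1] *)
Definition is_alpha (M : nat) (q : R) (a : nat -> nat) : Prop :=
  1 < q <= INR M + 1 /\
  in_Omega M a /\ ~ ends_in_zero a /\
  infinite_sum (fun i => INR (a i) / q ^ (S i)) 1 /\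
  (forall b, in_Omega M b -> ~ ends_in_zero b ->
     infinite_sum (fun i => INR (b i) / q ^ (S i)) 1 -> lex_le b a).

Definition word_seq (w : list nat) : nat -> nat := fun i => nth i w 0%nat.  (* w 0^oo *)
Definition word_lt (w v : list nat) : Prop := lex_lt (word_seq w) (word_seq v).
Definition word_le (w v : list nat) : Prop := lex_le (word_seq w) (word_seq v).
Definition wflip (M : nat) (w : list nat) : list nat := map (fun x => (M - x)%nat) w.
(* w^+ and w^- (only used where last letter < M, resp. > 0) *)
Definition wplus (w : list nat) : list nat := removelast w ++ [S (last w 0%nat)].
Definition wminus (w : list nat) : list nat := removelast w ++ [pred (last w 0%nat)].
Definition periodic (w : list nat) : nat -> nat :=
  fun i => nth (i mod length w) w 0%nat.
Definition word_then_periodic (u w : list nat) : nat -> nat :=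
  fun i => if (i <? length u)%nat then nth i u 0%nat
           else nth ((i - length u) mod length w) w 0%nat.
Definition prefix (a : nat -> nat) (j : nat) : list nat := map a (seq 0 j).

Definition in_V (M : nat) (c : nat -> nat) : Prop :=
  in_Omega M c /\
  forall n, lex_le (flip M c) (shiftn n c) /\ lex_le (shiftn n c) c.

Definition irreducible (M : nat) (a : nat -> nat) : Prop :=
  in_V M a /\
  forall j, (1 <= j)%nat -> (0 < a (j - 1)%nat)%nat ->
    in_V M (periodic (wminus (prefix a j))) ->
    lex_lt (word_then_periodic (prefix a j) (wplus (wflip M (prefix a j)))) a.

Definition fundamental (M : nat) (w : list nat) : Prop :=
  Forall (fun x => (x <= M)%nat) w /\
  ( ((2 <= length w)%nat /\
     forall i, (1 <= i < length w)%nat ->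
       word_le (wflip M (firstn (length w - i) w)) (skipn i w) /\
       word_lt (skipn i w) (firstn (length w - i) w))
  \/ ((2 <= M)%nat /\ exists a1, w = [a1] /\ (M - a1 <= a1 < M)%nat) ).

Definition qG_seq (M : nat) : nat -> nat :=
  if Nat.even M then fun _ => (M / 2)%nat
  else fun i => if Nat.even i then (M / 2 + 1)%nat else (M / 2)%nat.

From Stdlib Require Import Reals Lra Lia Arith ZArith List Classical FunctionalExtensionality.
From Coquelicot Require Import Coquelicot.
Import ListNotations.
Close Scope R_scope.

(* Since [alpha] is strictly increasing, [q_L(b) < q <= q_R(b)] reads
   [b^oo < alpha(q) <= b^+ (flip b)^oo], so the statement is about sequences.
   If [a = alpha(q)] lies in such an interval, it agrees with [b^oo] on the first [|b| - 1]
   letters: either [a] begins with [b], and being shift-maximal it cannot exceed [b^oo], or it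
   begins with [b^+], and the irreducibility test at [j = |b|] puts [a] above [b^+ (flip b)^oo].
   Conversely, if [a] is reducible, a failing test index [j] (or, when [a] is not in [V], the
   first [n] with [sigma^n a < flip a]; here [a >= alpha(q_G)] rules out the one bad case)
   gives the fundamental word [b = (a_1 ... a_j)^-] whose interval contains [a]. Both endpoints
   of that interval exist by Parry's criterion: every shift-maximal sequence not ending in
   [0^oo] is [alpha(q)] for some [q]. *)

(** * Lexicographic order *)

Lemma least_witness (P : nat -> Prop) :
  (exists n, P n) -> exists n, P n /\ forall m, m < n -> ~ P m.
Proof.
  intros HP.
  destruct (dec_inh_nat_subset_has_unique_least_element P (fun n => classic (P n)) HP)
    as [n [[Pn Hleast] _]].
  exists n. split; [exact Pn|]. intros m Hm Pm. specialize (Hleast m Pm). lia.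
Qed.

Lemma lex_le_eq_or_lt c d : lex_le c d <-> lex_lt c d \/ c = d.
Proof.
  unfold lex_le. split; intros [H|H]; auto.
  - right. now apply functional_extensionality.
  - right. now subst.
Qed.

Lemma lex_le_refl c : lex_le c c.
Proof. now right. Qed.

Lemma lex_lt_irrefl c : ~ lex_lt c c.
Proof. intros [n [_ H]]. lia. Qed.

Lemma lex_lt_trans c d e : lex_lt c d -> lex_lt d e -> lex_lt c e.
Proof.
  intros [n [H1 H2]] [m [H3 H4]]. exists (Nat.min n m). split.
  - intros i Hi. rewrite H1, H3 by lia. reflexivity.
  - destruct (lt_eq_lt_dec n m) as [[Hlt|<-]|Hgt].
    + rewrite Nat.min_l, <- (H3 n) by lia. exact H2.
    + rewrite Nat.min_id. lia.
    + rewrite Nat.min_r, (H1 m) by lia. exact H4.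
Qed.

Lemma lex_le_lt_trans c d e : lex_le c d -> lex_lt d e -> lex_lt c e.
Proof. rewrite lex_le_eq_or_lt. intros [H|<-] H'; eauto using lex_lt_trans. Qed.

Lemma lex_lt_le_trans c d e : lex_lt c d -> lex_le d e -> lex_lt c e.
Proof. rewrite lex_le_eq_or_lt. intros H [H'|<-]; eauto using lex_lt_trans. Qed.

Lemma lex_le_trans c d e : lex_le c d -> lex_le d e -> lex_le c e.
Proof.
  rewrite (lex_le_eq_or_lt c d). intros [H|<-] H'; auto.
  left. eapply lex_lt_le_trans; eauto.
Qed.

Lemma lex_lt_not_le c d : lex_lt c d -> ~ lex_le d c.
Proof. intros H H'. apply (lex_lt_irrefl c). eapply lex_lt_le_trans; eauto. Qed.

Lemma lex_lt_total c d : lex_lt c d \/ lex_le d c.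
Proof.
  destruct (classic (exists n, c n <> d n)) as [Hne|Heq].
  - destruct (least_witness _ Hne) as [n [Hn Hmin]].
    assert (Hpre : forall i, i < n -> c i = d i).
    { intros i Hi. apply NNPP. exact (Hmin i Hi). }
    destruct (lt_eq_lt_dec (c n) (d n)) as [[Hlt|Heq]|Hgt]; [| contradiction |].
    + left. now exists n.
    + right. left. exists n. split; auto. intros i Hi. symmetry. auto.
  - right. right. intros i. apply NNPP. intros Hi. apply Heq. exists i. auto.
Qed.

Lemma not_lex_lt c d : ~ lex_lt c d -> lex_le d c.
Proof. destruct (lex_lt_total c d); tauto. Qed.

Lemma lex_le_antisym c d : lex_le c d -> lex_le d c -> c = d.
Proof.
  rewrite lex_le_eq_or_lt. intros [H|H] H'; auto.
  exfalso. exact (lex_lt_not_le _ _ H H').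
Qed.

Lemma lex_le_iff_not_lex_lt c d : lex_le d c <-> ~ lex_lt c d.
Proof. split; [intros H H'; exact (lex_lt_not_le _ _ H' H) | apply not_lex_lt]. Qed.

Lemma lex_le_head c d : lex_le c d -> c 0 <= d 0.
Proof.
  intros [[n [H1 H2]]|H]; [|now rewrite H].
  destruct n; [lia|]. rewrite H1 by lia. lia.
Qed.

Lemma flip_involutive M c : in_Omega M c -> flip M (flip M c) = c.
Proof.
  intros Hc. apply functional_extensionality. intros i. unfold flip. specialize (Hc i). lia.
Qed.

Lemma flip_in_Omega M c : in_Omega M (flip M c).
Proof. intros i. unfold flip. lia. Qed.

Lemma shiftn_in_Omega M n c : in_Omega M c -> in_Omega M (shiftn n c).
Proof. intros Hc i. apply Hc. Qed.

Lemma shiftn_shiftn m n c : shiftn n (shiftn m c) = shiftn (m + n) c.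
Proof. apply functional_extensionality. intros i. unfold shiftn. f_equal. lia. Qed.

Lemma shiftn_flip M n c : shiftn n (flip M c) = flip M (shiftn n c).
Proof. reflexivity. Qed.

Lemma flip_lex_lt M c d :
  in_Omega M d -> lex_lt c d -> lex_lt (flip M d) (flip M c).
Proof.
  intros Hd [n [H1 H2]]. exists n. unfold flip. split.
  - intros i Hi. now rewrite H1.
  - specialize (Hd n). lia.
Qed.

Lemma flip_lex_le M c d :
  in_Omega M d -> lex_le c d -> lex_le (flip M d) (flip M c).
Proof.
  rewrite lex_le_eq_or_lt. intros Hd [H|<-].
  - left. now apply flip_lex_lt.
  - apply lex_le_refl.
Qed.

Lemma ends_in_zero_shiftn n c : ends_in_zero (shiftn n c) <-> ends_in_zero c.
Proof.
  split; intros [N HN].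
  - exists (n + N). intros i Hi. replace i with (n + (i - n)) by lia. apply HN. lia.
  - exists N. intros i Hi. apply HN. lia.
Qed.

Lemma not_ends_in_zero_pos c :
  ~ ends_in_zero c -> forall N, exists i, N <= i /\ 0 < c i.
Proof.
  intros Hc N. apply NNPP. intros Hnone. apply Hc. exists N. intros i Hi.
  destruct (c i) eqn:E; [reflexivity|]. exfalso. apply Hnone. exists i. split; [exact Hi | lia].
Qed.

Definition agree_upto (k : nat) (c d : nat -> nat) : Prop := forall i, i < k -> c i = d i.

Definition lex_lt_upto (k : nat) (c d : nat -> nat) : Prop :=
  exists p, p < k /\ agree_upto p c d /\ c p < d p.

Lemma lex_lt_upto_lex_lt k c d : lex_lt_upto k c d -> lex_lt c d.
Proof. intros [p [_ [H1 H2]]]. now exists p. Qed.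

Lemma lex_le_not_lex_lt_upto k c d : lex_le c d -> ~ lex_lt_upto k d c.
Proof. intros H H'. exact (lex_lt_not_le _ _ (lex_lt_upto_lex_lt _ _ _ H') H). Qed.

Lemma lex_lt_upto_congr k c d c' d' :
  agree_upto k c c' -> agree_upto k d d' -> lex_lt_upto k c d -> lex_lt_upto k c' d'.
Proof.
  intros Hc Hd [p [Hp [H1 H2]]]. exists p. split; [exact Hp|]. split.
  - intros t Ht. rewrite <- Hc, <- Hd by lia. auto.
  - rewrite <- Hc, <- Hd by lia. exact H2.
Qed.

Lemma agree_upto_sym k c d : agree_upto k c d -> agree_upto k d c.
Proof. intros H i Hi. symmetry. auto. Qed.

Lemma lex_lt_upto_iff_congr k c d c' d' :
  agree_upto k c c' -> agree_upto k d d' -> lex_lt_upto k c d <-> lex_lt_upto k c' d'.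
Proof.
  intros Hc Hd. split; apply lex_lt_upto_congr; auto using agree_upto_sym.
Qed.

Lemma lex_lt_iff_lex_lt_upto k c d :
  (forall p, k <= p -> c p = d p) -> lex_lt c d <-> lex_lt_upto k c d.
Proof.
  intros Htail. split; [|apply lex_lt_upto_lex_lt].
  intros [p [H1 H2]]. exists p. repeat split; auto.
  destruct (lt_dec p k); auto. rewrite Htail in H2 by lia. lia.
Qed.

Lemma lex_lt_upto_or_eq k c d : ~ lex_lt_upto k d c -> lex_lt_upto k c d \/ agree_upto k c d.
Proof.
  intros Hnot. destruct (classic (exists i, i < k /\ c i <> d i)) as [Hne|Heq].
  - destruct (least_witness _ Hne) as [i [[Hi Hcd] Hmin]].
    assert (Hpre : agree_upto i c d).
    { intros t Ht. apply NNPP. intros Hct. apply (Hmin t Ht). split; [lia | exact Hct]. }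
    left. exists i. repeat split; auto.
    destruct (lt_eq_lt_dec (c i) (d i)) as [[Hlt|Hc]|Hgt]; auto; [contradiction|].
    exfalso. apply Hnot. exists i. repeat split; auto. intros t Ht. symmetry. auto.
  - right. intros i Hi. apply NNPP. intros Hcd. apply Heq. eauto.
Qed.

Lemma agree_upto_squeeze k c x y :
  ~ lex_lt_upto k x c -> ~ lex_lt_upto k y x -> agree_upto k y c -> agree_upto k x c.
Proof.
  intros Hcx Hxy Hyc. destruct (lex_lt_upto_or_eq k c x Hcx) as [Hlt|Heq].
  - exfalso. apply Hxy. revert Hlt. apply lex_lt_upto_congr; [|intros i Hi; reflexivity].
    intros i Hi. symmetry. auto.
  - intros i Hi. symmetry. auto.
Qed.

Lemma agree_upto_lex_lt_shiftn k c d :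
  agree_upto k c d -> lex_lt c d -> lex_lt (shiftn k c) (shiftn k d).
Proof.
  intros Hk [n [H1 H2]].
  assert (k <= n) by (destruct (le_lt_dec k n); auto; rewrite Hk in H2; lia).
  exists (n - k). unfold shiftn. split.
  - intros i Hi. apply H1. lia.
  - now replace (k + (n - k)) with n by lia.
Qed.

Lemma agree_upto_lex_le_shiftn k c d :
  agree_upto k c d -> lex_le c d -> lex_le (shiftn k c) (shiftn k d).
Proof.
  rewrite lex_le_eq_or_lt. intros Hk [H|<-].
  - left. now apply agree_upto_lex_lt_shiftn.
  - apply lex_le_refl.
Qed.

Lemma agree_upto_shiftn_lex_lt k c d :
  agree_upto k c d -> lex_lt (shiftn k c) (shiftn k d) -> lex_lt c d.
Proof.
  intros Hk [n [H1 H2]]. exists (k + n). split; [|exact H2].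
  intros i Hi. destruct (lt_dec i k); auto.
  replace i with (k + (i - k)) by lia. apply H1. lia.
Qed.

Lemma not_lex_lt_upto_lower_last k x y y' :
  lex_lt_upto k x y -> (forall p, p < k - 1 -> y' p = y p) -> y (k - 1) <= S (y' (k - 1)) ->
  ~ lex_lt_upto k y' x.
Proof.
  intros [p [Hp [H1 H2]]] Hy' Hlast [r [Hr [R1 R2]]].
  destruct (lt_eq_lt_dec r p) as [[Hrp| ->]|Hrp].
  - rewrite Hy', H1 in R2 by lia. lia.
  - destruct (Nat.eq_dec p (k - 1)) as [->|Hne]; [lia|].
    rewrite Hy' in R2 by lia. lia.
  - specialize (R1 p Hrp). rewrite Hy' in R1 by lia. lia.
Qed.

Lemma lex_lt_upto_lower_last k x y y' :
  0 < k -> ~ lex_lt_upto k x y -> (forall p, p < k - 1 -> y' p = y p) -> y' (k - 1) < y (k - 1) ->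
  lex_lt_upto k y' x.
Proof.
  intros Hk Hxy Hy' Hlast. destruct (lex_lt_upto_or_eq k y x Hxy) as [[p [Hp [H1 H2]]]|Heq].
  - destruct (Nat.eq_dec p (k - 1)) as [->|Hne].
    + exists (k - 1). repeat split; [lia| |lia]. intros t Ht. rewrite Hy' by lia. auto.
    + exists p. repeat split; [lia| |].
      * intros t Ht. rewrite Hy' by lia. auto.
      * rewrite Hy' by lia. exact H2.
  - exists (k - 1). repeat split; [lia| |].
    + intros t Ht. rewrite Hy' by lia. apply Heq. lia.
    + rewrite <- Heq by lia. exact Hlast.
Qed.

(** * Periodic sequences and the set V *)

Lemma in_V_flip_le_shiftn M c n : in_V M c -> lex_le (flip M c) (shiftn n c).
Proof. intros [_ H]. apply H. Qed.

Lemma in_V_shiftn_le M c n : in_V M c -> lex_le (shiftn n c) c.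
Proof. intros [_ H]. apply H. Qed.

Definition has_period (n : nat) (c : nat -> nat) : Prop := forall i, c (i + n) = c i.

Lemma has_period_mul n c : has_period n c -> forall k i, c (k * n + i) = c i.
Proof.
  intros Hc k. induction k as [|k IH]; intros i; [reflexivity|].
  replace (S k * n + i) with (k * n + i + n) by lia. rewrite Hc. apply IH.
Qed.

Lemma has_period_mod n c : has_period n c -> forall i, c i = c (i mod n).
Proof.
  intros Hc i. rewrite (Nat.div_mod_eq i n) at 1. rewrite Nat.mul_comm. apply has_period_mul, Hc.
Qed.

Lemma has_period_shiftn_mod n c i : has_period n c -> shiftn i c = shiftn (i mod n) c.
Proof.
  intros Hc. apply functional_extensionality. intros s. unfold shiftn.
  rewrite (has_period_mod n c Hc (i + s)), (has_period_mod n c Hc (i mod n + s)).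
  now rewrite Nat.Div0.add_mod_idemp_l.
Qed.

Lemma has_period_flip_le_shiftn M n c :
  0 < n -> in_Omega M c -> has_period n c ->
  (forall i, i < n -> ~ lex_lt_upto (n - i) (shiftn i c) (flip M c)) ->
  forall i, lex_le (flip M c) (shiftn i c).
Proof.
  intros Hn Hc Hper Hwin.
  (* A first descent at position p past the window of [i mod n] yields, one period later,
     a descent at a strictly smaller position. *)
  assert (Hdesc : forall p i, ~ (agree_upto p (shiftn i c) (flip M c) /\ c (i + p) < M - c p)).
  { induction p as [p IH] using lt_wf_ind. intros i [H1 H2].
    set (r := i mod n). assert (Hr : r < n) by (apply Nat.mod_upper_bound; lia).
    assert (Hir : forall s, c (i + s) = c (r + s)).
    { intros s. change (shiftn i c s = shiftn r c s). now rewrite (has_period_shiftn_mod n c i). }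
    assert (H1' : forall s, s < p -> c (r + s) = M - c s).
    { intros s Hs. rewrite <- Hir. apply H1, Hs. }
    rewrite Hir in H2. clear H1.
    destruct (lt_dec p (n - r)) as [Hp|Hp].
    - apply (Hwin r Hr). exists p. repeat split; auto.
    - apply (IH (p - (n - r)) ltac:(lia) (n - r)). split.
      + intros s Hs. specialize (H1' (n - r + s) ltac:(lia)).
        replace (r + (n - r + s)) with (s + n) in H1' by lia. rewrite Hper in H1'.
        unfold shiftn, flip. pose proof (Hc s). pose proof (Hc (n - r + s)). lia.
      + replace (r + p) with (p - (n - r) + n) in H2 by lia. rewrite Hper in H2.
        replace (n - r + (p - (n - r))) with p by lia. pose proof (Hc p). lia. }
  intros i. apply not_lex_lt. intros [p [H1 H2]]. apply (Hdesc p i). split; auto.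
Qed.

Lemma has_period_shiftn_le n c :
  0 < n -> has_period n c ->
  (forall i, 0 < i < n -> lex_lt_upto (n - i) (shiftn i c) c) ->
  forall i, lex_le (shiftn i c) c.
Proof.
  intros Hn Hper Hwin i. rewrite (has_period_shiftn_mod n c i Hper).
  destruct (Nat.eq_dec (i mod n) 0) as [->|Hne]; [apply lex_le_refl|].
  left. apply (lex_lt_upto_lex_lt (n - i mod n)), Hwin.
  split; [lia | apply Nat.mod_upper_bound; lia].
Qed.

Lemma has_period_in_V M n c :
  0 < n -> in_Omega M c -> has_period n c ->
  (forall i, i < n -> ~ lex_lt_upto (n - i) (shiftn i c) (flip M c)) ->
  (forall i, 0 < i < n -> lex_lt_upto (n - i) (shiftn i c) c) ->
  in_V M c.
Proof.
  intros Hn Hc Hper Hlow Hup. split; [exact Hc|]. intros i. split.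
  - now apply (has_period_flip_le_shiftn M n).
  - now apply (has_period_shiftn_le n).
Qed.

Lemma lex_le_periodic_of_agree_upto n a c :
  0 < n -> has_period n c -> (forall k, lex_le (shiftn k a) a) -> agree_upto n a c ->
  lex_le a c.
Proof.
  intros Hn Hper Hmax Hpre. apply not_lex_lt. intros Hca.
  assert (Hblocks : forall k, agree_upto (k * n) a c).
  { induction k as [|k IH]; [intros i Hi; lia|].
    assert (Hshift : lex_lt c (shiftn (k * n) a)).
    { replace c with (shiftn (k * n) c) at 1.
      - apply agree_upto_lex_lt_shiftn; [|exact Hca]. intros i Hi. symmetry. auto.
      - apply functional_extensionality. intros i. apply has_period_mul, Hper. }
    assert (Hnext : agree_upto n (shiftn (k * n) a) c).
    { apply (agree_upto_squeeze n c _ a); [| |exact Hpre].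
      - apply lex_le_not_lex_lt_upto. now left.
      - apply lex_le_not_lex_lt_upto, Hmax. }
    intros i Hi. destruct (lt_dec i (k * n)) as [Hlt|Hge]; auto.
    replace i with (k * n + (i - k * n)) by lia. rewrite (has_period_mul n c Hper k).
    apply Hnext. simpl in Hi. lia. }
  replace a with c in Hca; [exact (lex_lt_irrefl c Hca)|].
  apply functional_extensionality. intros i. symmetry. apply (Hblocks (S i)). simpl. nia.
Qed.

Lemma prefix_length a j : length (prefix a j) = j.
Proof. unfold prefix. now rewrite length_map, length_seq. Qed.

Lemma nth_prefix a j i : i < j -> nth i (prefix a j) 0 = a i.
Proof.
  intros Hi. unfold prefix.
  rewrite nth_indep with (d' := a 0) by (now rewrite length_map, length_seq).
  now rewrite map_nth, seq_nth.
Qed.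

Lemma prefix_S a j : prefix a (S j) = prefix a j ++ [a j].
Proof. unfold prefix. now rewrite seq_S, map_app. Qed.

Lemma last_prefix a j : 0 < j -> last (prefix a j) 0 = a (j - 1).
Proof.
  intros Hj. destruct j as [|j]; [lia|]. rewrite prefix_S, last_last. f_equal. lia.
Qed.

Lemma prefix_eq_of_nth a w :
  (forall i, i < length w -> a i = nth i w 0) -> prefix a (length w) = w.
Proof.
  intros Hw. apply nth_ext with (d := 0) (d' := 0); [apply prefix_length|].
  intros i Hi. rewrite prefix_length in Hi. rewrite nth_prefix by exact Hi. auto.
Qed.

Lemma wplus_snoc l x : wplus (l ++ [x]) = l ++ [S x].
Proof. unfold wplus. now rewrite removelast_last, last_last. Qed.

Lemma wminus_snoc l x : wminus (l ++ [x]) = l ++ [pred x].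
Proof. unfold wminus. now rewrite removelast_last, last_last. Qed.

Lemma wflip_snoc M l x : wflip M (l ++ [x]) = wflip M l ++ [M - x].
Proof. unfold wflip. now rewrite map_app. Qed.

Lemma wflip_length M w : length (wflip M w) = length w.
Proof. apply length_map. Qed.

Lemma nth_wflip M w i : i < length w -> nth i (wflip M w) 0 = M - nth i w 0.
Proof.
  intros Hi. unfold wflip.
  rewrite nth_indep with (d' := (fun x => M - x) 0) by now rewrite length_map.
  now rewrite map_nth.
Qed.

Lemma wplus_length w : 0 < length w -> length (wplus w) = length w.
Proof.
  intros Hw. destruct (exists_last (l := w)) as [l [x ->]]; [intros ->; simpl in Hw; lia|].
  now rewrite wplus_snoc, !length_app.
Qed.

Lemma wminus_wplus w : 0 < length w -> wminus (wplus w) = w.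
Proof.
  intros Hw. destruct (exists_last (l := w)) as [l [x ->]]; [intros ->; simpl in Hw; lia|].
  now rewrite wplus_snoc, wminus_snoc.
Qed.

Lemma wplus_wminus u : 0 < last u 0 -> wplus (wminus u) = u.
Proof.
  intros Hu. destruct (exists_last (l := u)) as [l [x ->]]; [now intros ->|].
  rewrite last_last in Hu. rewrite wminus_snoc, wplus_snoc. do 2 f_equal. lia.
Qed.

Lemma wflip_wminus M u :
  0 < last u 0 <= M -> wflip M (wminus u) = wplus (wflip M u).
Proof.
  intros Hu. destruct (exists_last (l := u)) as [l [x ->]]; [now intros ->|].
  rewrite last_last in Hu. rewrite wminus_snoc, !wflip_snoc, wplus_snoc. do 2 f_equal. lia.
Qed.

Lemma periodic_lt w i : i < length w -> periodic w i = nth i w 0.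
Proof. intros Hi. unfold periodic. now rewrite Nat.mod_small. Qed.

Lemma periodic_has_period w : 0 < length w -> has_period (length w) (periodic w).
Proof.
  intros Hw i. unfold periodic. f_equal.
  rewrite Nat.Div0.add_mod, Nat.Div0.mod_same, Nat.add_0_r. apply Nat.Div0.mod_mod.
Qed.

Lemma periodic_in_Omega M w : List.Forall (fun x => x <= M) w -> in_Omega M (periodic w).
Proof.
  intros Hw i. unfold periodic. destruct (lt_dec (i mod length w) (length w)).
  - rewrite Forall_forall in Hw. apply Hw, nth_In. assumption.
  - rewrite nth_overflow by lia. lia.
Qed.

Lemma periodic_wflip M w : 0 < length w -> periodic (wflip M w) = flip M (periodic w).
Proof.
  intros Hw. apply functional_extensionality. intros i. unfold periodic, flip.
  rewrite wflip_length, nth_wflip; [reflexivity|]. apply Nat.mod_upper_bound. lia.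
Qed.

Lemma periodic_not_ends_in_zero w i : i < length w -> 0 < nth i w 0 -> ~ ends_in_zero (periodic w).
Proof.
  intros Hi Hpos [N HN]. specialize (HN (N * length w + i) ltac:(nia)).
  rewrite (has_period_mul _ _ (periodic_has_period w ltac:(lia))), periodic_lt in HN by lia.
  lia.
Qed.

Lemma word_then_periodic_lt u w i : i < length u -> word_then_periodic u w i = nth i u 0.
Proof. intros Hi. unfold word_then_periodic. now rewrite (proj2 (Nat.ltb_lt _ _) Hi). Qed.

Lemma shiftn_word_then_periodic u w :
  shiftn (length u) (word_then_periodic u w) = periodic w.
Proof.
  apply functional_extensionality. intros i. unfold shiftn, word_then_periodic, periodic.
  rewrite (proj2 (Nat.ltb_ge _ _)) by lia. do 3 f_equal. lia.
Qed.

Lemma word_lt_iff_lex_lt_upto k v w :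
  length v <= k -> length w <= k -> word_lt v w <-> lex_lt_upto k (word_seq v) (word_seq w).
Proof.
  intros Hv Hw. apply lex_lt_iff_lex_lt_upto. intros p Hp. unfold word_seq.
  rewrite !nth_overflow by lia. reflexivity.
Qed.

(** * Fundamental words *)

Section Windows.

Variables (M : nat) (b : list nat) (i : nat).

Let c := periodic b.

Lemma word_seq_skipn_agree_upto :
  agree_upto (length b - i) (word_seq (skipn i b)) (shiftn i c).
Proof.
  intros p Hp. unfold word_seq, shiftn, c. rewrite nth_skipn, periodic_lt; [reflexivity | lia].
Qed.

Lemma word_seq_firstn_agree_upto :
  agree_upto (length b - i) (word_seq (firstn (length b - i) b)) c.
Proof.
  intros p Hp. unfold word_seq, c. rewrite nth_firstn, periodic_lt by lia.
  now rewrite (proj2 (Nat.ltb_lt _ _) Hp).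
Qed.

Lemma word_seq_wflip_firstn_agree_upto :
  agree_upto (length b - i) (word_seq (wflip M (firstn (length b - i) b))) (flip M c).
Proof.
  intros p Hp. unfold flip. rewrite <- (word_seq_firstn_agree_upto p Hp).
  apply nth_wflip. rewrite length_firstn. lia.
Qed.

Lemma word_lt_suffix_iff :
  word_lt (skipn i b) (firstn (length b - i) b) <-> lex_lt_upto (length b - i) (shiftn i c) c.
Proof.
  rewrite (word_lt_iff_lex_lt_upto (length b - i)) by (rewrite ?length_skipn, ?length_firstn; lia).
  apply lex_lt_upto_iff_congr; [apply word_seq_skipn_agree_upto | apply word_seq_firstn_agree_upto].
Qed.

Lemma word_le_flip_suffix_iff :
  word_le (wflip M (firstn (length b - i) b)) (skipn i b) <->
  ~ lex_lt_upto (length b - i) (shiftn i c) (flip M c).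
Proof.
  unfold word_le. rewrite lex_le_iff_not_lex_lt.
  fold (word_lt (skipn i b) (wflip M (firstn (length b - i) b))).
  rewrite (word_lt_iff_lex_lt_upto (length b - i))
    by (rewrite ?wflip_length, ?length_skipn, ?length_firstn; lia).
  rewrite lex_lt_upto_iff_congr;
    [reflexivity | apply word_seq_skipn_agree_upto | apply word_seq_wflip_firstn_agree_upto].
Qed.

End Windows.

Lemma fundamental_in_V M b :
  fundamental M b ->
  0 < length b /\ in_V M (periodic b) /\ nth (length b - 1) b 0 < M /\
  (forall i, 0 < i < length b ->
     lex_lt_upto (length b - i) (shiftn i (periodic b)) (periodic b)).
Proof.
  set (c := periodic b). intros [Hb [[Hm Hwin]|[HM [x [-> Hx]]]]].
  - assert (Hc : in_Omega M c) by now apply periodic_in_Omega.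
    assert (Hup : forall i, 0 < i < length b -> lex_lt_upto (length b - i) (shiftn i c) c).
    { intros i Hi. apply word_lt_suffix_iff, Hwin. lia. }
    assert (Hlow : forall i, 0 < i < length b ->
                   ~ lex_lt_upto (length b - i) (shiftn i c) (flip M c)).
    { intros i Hi. apply (word_le_flip_suffix_iff M), Hwin. lia. }
    assert (Hlast : M - c 0 <= c (length b - 1) < c 0).
    { split.
      - apply not_lt. intros Hlt. apply (Hlow (length b - 1) ltac:(lia)).
        exists 0. repeat split; [lia | intros t Ht; lia |]. unfold shiftn, flip.
        now rewrite Nat.add_0_r.
      - destruct (Hup (length b - 1) ltac:(lia)) as [p [Hp [_ Hcp]]]. unfold shiftn in Hcp.
        replace p with 0 in Hcp by lia. now rewrite Nat.add_0_r in Hcp. }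
    refine (conj _ (conj _ (conj _ Hup))); [lia| |].
    + apply (has_period_in_V M (length b)); auto; [lia | now apply periodic_has_period; lia |].
      intros [|i] Hi; [|apply Hlow; lia].
      intros [p [Hp [Hagree Hcp]]]. unfold shiftn, flip in *.
      destruct p; [simpl in Hcp; lia|]. specialize (Hagree 0 ltac:(lia)). simpl in Hagree. lia.
    + rewrite <- periodic_lt by lia. fold c. pose proof (Hc 0). lia.
  - assert (Hconst : c = fun _ => x).
    { apply functional_extensionality. intros i. unfold c, periodic. simpl length.
      now rewrite Nat.mod_1_r. }
    refine (conj _ (conj _ (conj _ _)));
      [simpl; lia | | simpl; lia | intros i Hi; simpl in Hi; lia].
    rewrite Hconst. split; [intros i; lia|]. intros n. split; [|apply lex_le_refl].
    destruct (Nat.eq_dec (M - x) x) as [E|E]; [right; intros i; unfold flip, shiftn; lia|].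
    left. exists 0. split; [intros i Hi; lia | unfold flip, shiftn; lia].
Qed.

Lemma fundamental_of_in_V M b :
  0 < length b -> in_V M (periodic b) -> nth (length b - 1) b 0 < M ->
  (forall i, 0 < i < length b ->
     lex_lt_upto (length b - i) (shiftn i (periodic b)) (periodic b)) ->
  fundamental M b.
Proof.
  set (c := periodic b). intros Hm HV Hlast Hup. split.
  { apply Forall_forall. intros x Hx. apply In_nth with (d := 0) in Hx as [i [Hi <-]].
    rewrite <- periodic_lt by exact Hi. apply (proj1 HV). }
  destruct (Nat.eq_dec (length b) 1) as [Hm1|Hm1].
  - right. destruct b as [|x [|y b']]; simpl in Hm1; try lia.
    assert (Hflip := lex_le_head _ _ (in_V_flip_le_shiftn M _ 0 HV)).
    unfold flip, shiftn, c, periodic in Hflip. simpl in Hflip, Hlast.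
    split; [lia|]. exists x. split; [reflexivity | lia].
  - left. split; [lia|]. intros i Hi. split.
    + apply word_le_flip_suffix_iff, lex_le_not_lex_lt_upto, in_V_flip_le_shiftn, HV.
    + apply word_lt_suffix_iff, Hup. lia.
Qed.

Lemma fundamental_iff M b :
  fundamental M b <->
  0 < length b /\ in_V M (periodic b) /\ nth (length b - 1) b 0 < M /\
  (forall i, 0 < i < length b ->
     lex_lt_upto (length b - i) (shiftn i (periodic b)) (periodic b)).
Proof.
  split; [apply fundamental_in_V|]. intros (Hm & HV & Hlast & Hup). now apply fundamental_of_in_V.
Qed.

(* [alpha_qR M b] is the word [b^+ (flip b)^oo], i.e. the expansion [alpha (q_R b)]. *)
Definition alpha_qR (M : nat) (b : list nat) : nat -> nat :=
  word_then_periodic (wplus b) (wflip M b).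

Definition quasi_greedy (M : nat) (c : nat -> nat) : Prop :=
  in_Omega M c /\ ~ ends_in_zero c /\ forall n, lex_le (shiftn n c) c.

Section AlphaQR.

Variables (M : nat) (b : list nat).
Hypothesis Hb : 0 < length b.

Let c := periodic b.
Let t := alpha_qR M b.

Lemma alpha_qR_agree_upto : agree_upto (length b - 1) t c.
Proof.
  destruct (exists_last (l := b)) as [l [x Hlx]]; [intros ->; simpl in Hb; lia|].
  intros i Hi. unfold t, c, alpha_qR.
  rewrite word_then_periodic_lt, periodic_lt by (rewrite ?wplus_length by exact Hb; lia).
  rewrite Hlx in *. rewrite wplus_snoc, length_app in *. simpl in Hi.
  rewrite !app_nth1 by lia. reflexivity.
Qed.

Lemma alpha_qR_last : t (length b - 1) = S (c (length b - 1)).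
Proof.
  destruct (exists_last (l := b)) as [l [x Hlx]]; [intros ->; simpl in Hb; lia|].
  unfold t, c, alpha_qR.
  rewrite word_then_periodic_lt, periodic_lt by (rewrite ?wplus_length by exact Hb; lia).
  rewrite Hlx, wplus_snoc, length_app. simpl. rewrite Nat.add_sub.
  now rewrite !nth_middle.
Qed.

Lemma shiftn_alpha_qR : shiftn (length b) t = flip M c.
Proof.
  unfold t, c, alpha_qR. rewrite <- (wplus_length b Hb), shiftn_word_then_periodic.
  now apply periodic_wflip.
Qed.

Lemma periodic_lt_alpha_qR : lex_lt c t.
Proof.
  exists (length b - 1). split.
  - intros i Hi. symmetry. now apply alpha_qR_agree_upto.
  - rewrite alpha_qR_last. lia.
Qed.

End AlphaQR.

Lemma alpha_qR_wminus M u :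
  0 < last u 0 <= M -> alpha_qR M (wminus u) = word_then_periodic u (wplus (wflip M u)).
Proof. intros Hu. unfold alpha_qR. now rewrite wplus_wminus, wflip_wminus by lia. Qed.

Lemma shiftn_alpha_qR_lt_of_length_le M b k :
  0 < length b -> in_V M (periodic b) -> length b <= k ->
  lex_lt (shiftn k (alpha_qR M b)) (alpha_qR M b).
Proof.
  intros Hb HV Hk. set (c := periodic b) in *.
  apply (lex_le_lt_trans _ c); [|now apply periodic_lt_alpha_qR].
  replace k with (length b + (k - length b)) by lia.
  rewrite <- shiftn_shiftn, shiftn_alpha_qR, shiftn_flip by exact Hb. fold c.
  rewrite <- (flip_involutive M c (proj1 HV)) at 2.
  apply flip_lex_le; [apply shiftn_in_Omega, HV | now apply in_V_flip_le_shiftn].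
Qed.

Lemma alpha_qR_shiftn_le M b :
  fundamental M b -> forall k, lex_le (shiftn k (alpha_qR M b)) (alpha_qR M b).
Proof.
  rewrite fundamental_iff. intros [Hb [HV [_ Hup]]] k.
  set (m := length b) in *. set (c := periodic b) in *. set (t := alpha_qR M b).
  assert (Htc : agree_upto (m - 1) t c) by now apply alpha_qR_agree_upto.
  assert (Htlast : t (m - 1) = S (c (m - 1))) by now apply alpha_qR_last.
  assert (Htail : shiftn m t = flip M c) by now apply shiftn_alpha_qR.
  destruct (Nat.eq_dec k 0) as [->|Hk0]; [apply lex_le_refl|].
  destruct (le_lt_dec m k) as [Hmk|Hkm]; [left; now apply shiftn_alpha_qR_lt_of_length_le|].
  destruct (Hup k ltac:(lia)) as [p [Hp [Hagree Hcp]]].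
  assert (Hshift : forall i, k + i < m - 1 -> shiftn k t i = shiftn k c i).
  { intros i Hi. apply Htc. exact Hi. }
  destruct (lt_dec p (m - k - 1)) as [Hp'|Hp'].
  - left. exists p. split.
    + intros i Hi. rewrite Hshift, Htc by lia. apply Hagree. exact Hi.
    + rewrite Hshift, Htc by lia. exact Hcp.
  - replace p with (m - k - 1) in * by lia.
    unfold shiftn in Hcp. replace (k + (m - k - 1)) with (m - 1) in Hcp by lia.
    assert (Hwin : agree_upto (m - k - 1) (shiftn k t) t).
    { intros i Hi. rewrite Hshift, Htc by lia. apply Hagree. exact Hi. }
    assert (Hat : shiftn k t (m - k - 1) = S (c (m - 1))).
    { unfold shiftn. now replace (k + (m - k - 1)) with (m - 1) by lia. }
    assert (Ht' : t (m - k - 1) = c (m - k - 1)) by (apply Htc; lia).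
    destruct (Nat.eq_dec (S (c (m - 1))) (c (m - k - 1))) as [Heq|Hne].
    + (* The window of length [m - k] is a tie: compare one window further. *)
      left. apply (agree_upto_shiftn_lex_lt (m - k)).
      { intros i Hi. destruct (Nat.eq_dec i (m - k - 1)) as [->|Hi']; [congruence|].
        apply Hwin. lia. }
      rewrite shiftn_shiftn. replace (k + (m - k)) with m by lia. rewrite Htail.
      apply (lex_le_lt_trans _ (shiftn (m - k) c)); [now apply in_V_flip_le_shiftn|].
      exists (k - 1). unfold shiftn. split.
      * intros i Hi. symmetry. apply Htc. lia.
      * replace (m - k + (k - 1)) with (m - 1) by lia. rewrite Htlast. lia.
    + left. exists (m - k - 1). split; [exact Hwin|]. rewrite Hat, Ht'. lia.
Qed.

Lemma fundamental_quasi_greedy M b :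
  fundamental M b -> quasi_greedy M (periodic b) /\ quasi_greedy M (alpha_qR M b).
Proof.
  intros Hfund. pose proof Hfund as [Hb [HV [Hlast _]]]%fundamental_iff.
  set (m := length b) in *. set (c := periodic b) in *. set (t := alpha_qR M b).
  assert (Hc : in_Omega M c) by apply HV.
  assert (Hc0 : M - c 0 <= c 0) by exact (lex_le_head _ _ (in_V_flip_le_shiftn M c 0 HV)).
  assert (Htc : agree_upto (m - 1) t c) by now apply alpha_qR_agree_upto.
  assert (Htlast : t (m - 1) = S (c (m - 1))) by now apply alpha_qR_last.
  assert (Htail : shiftn m t = flip M c) by now apply shiftn_alpha_qR.
  assert (Hlast' : c (m - 1) < M) by (unfold c; rewrite periodic_lt by lia; exact Hlast).
  unfold quasi_greedy. split; split; [exact Hc | split | | split].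
  - apply (periodic_not_ends_in_zero b 0); [lia|]. rewrite <- periodic_lt by lia. fold c. lia.
  - intros n. now apply (in_V_shiftn_le M).
  - intros i. destruct (lt_eq_lt_dec i (m - 1)) as [[Hi| ->]|Hi].
    + rewrite Htc by exact Hi. apply Hc.
    + lia.
    + replace i with (m + (i - m)) by lia. change (shiftn m t (i - m) <= M).
      rewrite Htail. apply flip_in_Omega.
  - intros Hzero. apply (proj2 (ends_in_zero_shiftn m t)) in Hzero. rewrite Htail in Hzero.
    revert Hzero. unfold c. rewrite <- periodic_wflip by exact Hb.
    apply (periodic_not_ends_in_zero _ (m - 1)); rewrite ?wflip_length; [lia|].
    rewrite nth_wflip by lia. lia.
  - now apply alpha_qR_shiftn_le.
Qed.

(** * Irreducible sequences *)

Lemma irreducible_alpha_qR_lt M a b :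
  (forall n, lex_le (shiftn n a) a) -> irreducible M a -> fundamental M b ->
  lex_lt (periodic b) a -> lex_lt (alpha_qR M b) a.
Proof.
  intros Hmax Hirr Hfund Hca. pose proof Hfund as [Hb [HV [Hlast _]]]%fundamental_iff.
  set (m := length b) in *. set (c := periodic b) in *. set (t := alpha_qR M b).
  destruct (lex_lt_total t a) as [Hta|Hat]; [exact Hta|].
  assert (Htc : agree_upto (m - 1) t c) by now apply alpha_qR_agree_upto.
  assert (Htlast : t (m - 1) = S (c (m - 1))) by now apply alpha_qR_last.
  assert (Hac : agree_upto (m - 1) a c).
  { apply (agree_upto_squeeze _ c a t); [| |exact Htc];
      apply lex_le_not_lex_lt_upto; [now left | exact Hat]. }
  assert (Hlow : c (m - 1) <= a (m - 1)).
  { apply not_lt. intros Hlt. apply (lex_lt_not_le _ _ Hca). left.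
    exists (m - 1). split; [exact Hac | exact Hlt]. }
  assert (Hup : a (m - 1) <= t (m - 1)).
  { apply not_lt. intros Hlt. apply (lex_lt_not_le t a); [|exact Hat].
    exists (m - 1). split; [|exact Hlt]. intros i Hi. rewrite Hac, Htc by lia. reflexivity. }
  destruct (Nat.eq_dec (a (m - 1)) (c (m - 1))) as [Heq|Hne].
  - (* [a] begins with the period [b] of [c] *)
    exfalso. apply (lex_lt_not_le _ _ Hca), (lex_le_periodic_of_agree_upto m); auto.
    + now apply periodic_has_period.
    + intros i Hi. destruct (Nat.eq_dec i (m - 1)) as [->|Hi']; [exact Heq|]. apply Hac. lia.
  - (* [a] begins with [b^+], so the irreducibility test at [j = m] applies *)
    assert (Hat' : a (m - 1) = t (m - 1)) by lia.
    assert (Hpre : prefix a m = wplus b).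
    { unfold m. rewrite <- (wplus_length b Hb). apply prefix_eq_of_nth.
      intros i Hi. rewrite wplus_length in Hi by exact Hb.
      rewrite <- (word_then_periodic_lt (wplus b) (wflip M b)) by (rewrite wplus_length; lia).
      fold (alpha_qR M b) t. destruct (Nat.eq_dec i (m - 1)) as [->|Hi']; [exact Hat'|].
      rewrite Hac, Htc by lia. reflexivity. }
    assert (Hlast_a : 0 < last (prefix a m) 0 <= M).
    { rewrite last_prefix by exact Hb. unfold c in Hat'. rewrite Hat', Htlast.
      unfold c. rewrite periodic_lt by lia. lia. }
    assert (Hwm : wminus (prefix a m) = b).
    { rewrite Hpre. now apply wminus_wplus. }
    destruct Hirr as [_ Htest]. unfold t. rewrite <- Hwm at 1.
    rewrite alpha_qR_wminus by exact Hlast_a.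
    apply Htest; [lia | rewrite <- last_prefix by exact Hb; lia | now rewrite Hwm].
Qed.

Section ReducedPrefix.

Variables (a : nat -> nat) (j : nat).
Hypothesis Hj : 0 < j.

Let b := wminus (prefix a j).
Let c := periodic b.

Lemma wminus_prefix_length : length b = j.
Proof.
  unfold b. destruct j as [|j']; [lia|]. rewrite prefix_S, wminus_snoc, length_app, prefix_length.
  simpl. lia.
Qed.

Lemma wminus_prefix_has_period : has_period j c.
Proof. rewrite <- wminus_prefix_length. apply periodic_has_period. rewrite wminus_prefix_length.
exact Hj. Qed.

Lemma wminus_prefix_agree_upto : agree_upto (j - 1) c a.
Proof.
  intros i Hi. unfold c. rewrite periodic_lt by (rewrite wminus_prefix_length; lia).
  unfold b. destruct j as [|j']; [lia|].
  rewrite prefix_S, wminus_snoc, app_nth1 by (rewrite prefix_length; lia).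
  apply nth_prefix. lia.
Qed.

Lemma wminus_prefix_last : c (j - 1) = pred (a (j - 1)).
Proof.
  unfold c. rewrite periodic_lt by (rewrite wminus_prefix_length; lia).
  unfold b. destruct j as [|j']; [lia|]. rewrite prefix_S, wminus_snoc.
  replace (S j' - 1) with (length (prefix a j')) by (rewrite prefix_length; lia).
  rewrite nth_middle, prefix_length. reflexivity.
Qed.

Lemma wminus_prefix_lt : 0 < a (j - 1) -> lex_lt c a.
Proof.
  intros Hpos. exists (j - 1). split; [apply wminus_prefix_agree_upto|].
  rewrite wminus_prefix_last. lia.
Qed.

Lemma alpha_qR_wminus_prefix_agree_upto M :
  0 < a (j - 1) <= M -> agree_upto j (alpha_qR M b) a.
Proof.
  intros Ha i Hi. unfold b. rewrite alpha_qR_wminus by (rewrite last_prefix; lia).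
  rewrite word_then_periodic_lt by (rewrite prefix_length; lia). apply nth_prefix, Hi.
Qed.

End ReducedPrefix.

Lemma wminus_prefix_fundamental M a j :
  in_Omega M a -> (forall n, lex_le (shiftn n a) a) -> 0 < j -> 0 < a (j - 1) ->
  in_V M (periodic (wminus (prefix a j))) -> fundamental M (wminus (prefix a j)).
Proof.
  intros Ha Hmax Hj Hpos HV. set (b := wminus (prefix a j)) in *. set (c := periodic b) in *.
  assert (Hlen : length b = j) by now apply wminus_prefix_length.
  assert (Hca : agree_upto (j - 1) c a) by now apply wminus_prefix_agree_upto.
  assert (Hclast : c (j - 1) = pred (a (j - 1))) by now apply wminus_prefix_last.
  apply fundamental_iff. rewrite Hlen. refine (conj Hj (conj HV (conj _ _))).
  - rewrite <- periodic_lt by lia. fold c. rewrite Hclast. pose proof (Ha (j - 1)). lia.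
  - intros i Hi. destruct (lex_lt_upto_or_eq (j - i) (shiftn i c) c) as [Hlt|Heq]; [|exact Hlt|].
    { apply lex_le_not_lex_lt_upto, (in_V_shiftn_le M), HV. }
    (* equality on the window would make [shiftn i a] exceed [a] at its last letter *)
    exfalso. apply (lex_le_not_lex_lt_upto (j - i) _ _ (Hmax i)). exists (j - i - 1).
    split; [lia|]. split.
    + intros p Hp. unfold shiftn. rewrite <- !Hca by lia. symmetry. apply Heq. lia.
    + unfold shiftn. replace (i + (j - i - 1)) with (j - 1) by lia.
      specialize (Heq (j - i - 1) ltac:(lia)). unfold shiftn in Heq.
      replace (i + (j - i - 1)) with (j - 1) in Heq by lia.
      rewrite <- Hca by lia. lia.
Qed.

Lemma nat_even_half M :
  (Nat.even M = true /\ M = 2 * (M / 2)) \/ (Nat.even M = false /\ M = 2 * (M / 2) + 1).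
Proof.
  pose proof (Nat.div_mod_eq M 2) as HM. pose proof (Nat.mod_upper_bound M 2 ltac:(lia)).
  assert (Hev : Nat.even M = Nat.even (M mod 2)).
  { rewrite HM at 1. now rewrite Nat.add_comm, Nat.even_add_mul_2. }
  destruct (M mod 2) as [|[|]]; [left | right | lia]; rewrite Hev;
    split; [reflexivity | lia | reflexivity | lia].
Qed.

Lemma qG_seq_flip_le M : lex_le (flip M (qG_seq M)) (qG_seq M).
Proof.
  unfold qG_seq. destruct (nat_even_half M) as [[Hev HM]|[Hev HM]]; rewrite Hev.
  - right. intros i. unfold flip. lia.
  - left. exists 0. split; [intros i Hi; lia|]. unfold flip. cbn -[Nat.div Nat.sub]. lia.
Qed.

Lemma flip_le_of_qG_seq_le M a : in_Omega M a -> lex_le (qG_seq M) a -> lex_le (flip M a) a.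
Proof.
  intros Ha HqG. apply (lex_le_trans _ (flip M (qG_seq M))); [now apply flip_lex_le|].
  exact (lex_le_trans _ _ _ (qG_seq_flip_le M) HqG).
Qed.

(* For odd [M] the sequence [alpha(q_G)] is [((k+1) k)^oo], whose reflection is its own shift. *)
Lemma flip_le_shift_of_qG_seq_le M a :
  in_Omega M a -> lex_le (qG_seq M) a -> 2 * a 0 = M + 1 -> lex_le (flip M a) (shiftn 1 a).
Proof.
  intros Ha HqG Ha0. destruct (nat_even_half M) as [[Hev HM]|[Hev HM]]; [lia|].
  set (g := qG_seq M) in *.
  assert (Hg : forall i, g i = if Nat.even i then M / 2 + 1 else M / 2).
  { intros i. unfold g, qG_seq. now rewrite Hev. }
  assert (Hflip_g : flip M g = shiftn 1 g).
  { apply functional_extensionality. intros i. unfold flip, shiftn. rewrite (Hg i), (Hg (1 + i)).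
    change (1 + i) with (S i). rewrite Nat.even_succ, <- Nat.negb_even.
    destruct (Nat.even i); cbn -[Nat.div Nat.sub]; lia. }
  apply (lex_le_trans _ (flip M g)); [now apply flip_lex_le|]. rewrite Hflip_g.
  apply agree_upto_lex_le_shiftn; [|exact HqG].
  intros i Hi. replace i with 0 by lia. rewrite Hg. cbn -[Nat.div Nat.sub]. lia.
Qed.

Section FirstFlipDescent.

Variables (M : nat) (a : nat -> nat) (n : nat).
Hypothesis Ha : in_Omega M a.
Hypothesis Hmax : forall k, lex_le (shiftn k a) a.
Hypothesis HqG : lex_le (qG_seq M) a.
Hypothesis Hdesc : lex_lt (shiftn n a) (flip M a).
Hypothesis Hmin : forall i, i < n -> lex_le (flip M a) (shiftn i a).

Let b := wminus (prefix a n).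
Let c := periodic b.

Lemma first_descent_pos : 0 < n.
Proof.
  destruct n as [|n']; [|lia]. exfalso. apply (lex_lt_not_le _ _ Hdesc).
  exact (flip_le_of_qG_seq_le M a Ha HqG).
Qed.

Lemma first_descent_window i : i < n -> lex_lt_upto (n - i) (flip M a) (shiftn i a).
Proof.
  intros Hi.
  destruct (lex_lt_upto_or_eq (n - i) (flip M a) (shiftn i a)) as [Hlt|Heq]; [|exact Hlt|].
  { apply lex_le_not_lex_lt_upto, Hmin, Hi. }
  (* equality on the window would propagate the descent back to [flip M a <= shiftn n a] *)
  exfalso. apply (lex_lt_not_le _ _ Hdesc).
  apply (lex_le_trans _ (shiftn (n - i) (flip M a))).
  - rewrite shiftn_flip. apply flip_lex_le, Hmax. exact Ha.
  - replace n with (i + (n - i)) at 2 by lia. rewrite <- shiftn_shiftn.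
    now apply agree_upto_lex_le_shiftn, Hmin.
Qed.

Lemma first_descent_last_pos : 0 < a (n - 1).
Proof.
  pose proof first_descent_pos as Hn.
  destruct (first_descent_window (n - 1) ltac:(lia)) as [p [Hp [_ Hlt]]].
  replace p with 0 in Hlt by lia. unfold flip, shiftn in Hlt. rewrite Nat.add_0_r in Hlt. lia.
Qed.

Lemma first_descent_in_Omega : in_Omega M c.
Proof.
  pose proof first_descent_pos as Hn. pose proof first_descent_last_pos as Hpos.
  intros i. rewrite (has_period_mod n c (wminus_prefix_has_period a n Hn)).
  assert (Hi : i mod n < n) by (apply Nat.mod_upper_bound; lia).
  destruct (Nat.eq_dec (i mod n) (n - 1)) as [->|Hne].
  - unfold c, b. rewrite wminus_prefix_last by exact Hn. pose proof (Ha (n - 1)). lia.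
  - unfold c, b. rewrite wminus_prefix_agree_upto by lia. apply Ha.
Qed.

Lemma first_descent_not_lt_flip : ~ lex_lt_upto n c (flip M c).
Proof.
  pose proof first_descent_pos as Hn. pose proof first_descent_last_pos as Hpos.
  assert (Hca : agree_upto (n - 1) c a) by now apply wminus_prefix_agree_upto.
  assert (Hclast : c (n - 1) = pred (a (n - 1))) by now apply wminus_prefix_last.
  destruct (first_descent_window 0 Hn) as [p [Hp [Hagree Hlt]]].
  intros [r [Hr [Ragree Rlt]]]. unfold agree_upto, flip, shiftn in Hagree, Hlt, Ragree, Rlt.
  simpl in Hagree, Hlt.
  destruct (lt_dec r (n - 1)) as [Hr'|Hr'].
  - rewrite Hca in Rlt by exact Hr'. destruct (lt_eq_lt_dec r p) as [[Hrp| ->]|Hrp].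
    + specialize (Hagree r Hrp). lia.
    + lia.
    + specialize (Ragree p Hrp). rewrite Hca in Ragree by lia. lia.
  - replace r with (n - 1) in * by lia. rewrite Hclast in Rlt.
    assert (Hp' : p = n - 1).
    { destruct (lt_dec p (n - 1)) as [Hp'|]; [|lia]. exfalso.
      specialize (Ragree p Hp'). rewrite Hca in Ragree by exact Hp'. lia. }
    subst p. assert (Hodd : 2 * a (n - 1) = M + 1) by lia.
    destruct (Nat.eq_dec n 1) as [Hn1|Hn1].
    + (* excluded by [alpha(q_G) <= a] *)
      subst n. apply (lex_lt_not_le _ _ Hdesc), flip_le_shift_of_qG_seq_le; auto.
    + specialize (Ragree 0 ltac:(lia)). rewrite Hca in Ragree by lia. lia.
Qed.

Lemma first_descent_in_V : in_V M c.
Proof.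
  pose proof first_descent_pos as Hn. pose proof first_descent_last_pos as Hpos.
  assert (Hca : agree_upto (n - 1) c a) by now apply wminus_prefix_agree_upto.
  assert (Hclast : c (n - 1) = pred (a (n - 1))) by now apply wminus_prefix_last.
  assert (Hshift : forall i p, p < n - i - 1 -> shiftn i c p = shiftn i a p).
  { intros i p Hp. apply Hca. lia. }
  assert (Hlast : forall f, forall i, i < n -> shiftn i f (n - i - 1) = f (n - 1)).
  { intros f i Hi. unfold shiftn. now replace (i + (n - i - 1)) with (n - 1) by lia. }
  (* On each window, [shiftn i c] is [shiftn i a] with its last letter lowered by one. *)
  apply (has_period_in_V M n);
    [exact Hn | exact first_descent_in_Omega | now apply wminus_prefix_has_period | |].
  - intros [|i] Hi; [rewrite Nat.sub_0_r; exact first_descent_not_lt_flip|].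
    apply (not_lex_lt_upto_lower_last _ _ (shiftn (S i) a)).
    + apply (lex_lt_upto_congr _ (flip M a) (shiftn (S i) a));
        [| intros p Hp; reflexivity | now apply first_descent_window].
      intros p Hp. unfold flip. rewrite Hca by lia. reflexivity.
    + intros p Hp. apply Hshift. lia.
    + rewrite !Hlast, Hclast by exact Hi. lia.
  - intros i Hi. apply (lex_lt_upto_lower_last _ _ (shiftn i a)); [lia| | |].
    + intros Hlt. apply (lex_le_not_lex_lt_upto (n - i) _ _ (Hmax i)).
      revert Hlt. apply lex_lt_upto_congr; [|intros p Hp; reflexivity].
      intros p Hp. apply Hca. lia.
    + intros p Hp. apply Hshift. lia.
    + rewrite !Hlast, Hclast by lia. lia.
Qed.

Lemma first_descent_lt_alpha_qR : lex_lt a (alpha_qR M b).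
Proof.
  pose proof first_descent_pos as Hn. pose proof first_descent_last_pos as Hpos.
  assert (Hlen : length b = n) by now apply wminus_prefix_length.
  apply (agree_upto_shiftn_lex_lt n).
  { apply agree_upto_sym, alpha_qR_wminus_prefix_agree_upto; [exact Hn|].
    split; [exact Hpos | apply Ha]. }
  assert (Htail : shiftn n (alpha_qR M b) = flip M c)
    by (rewrite <- Hlen; apply shiftn_alpha_qR; lia).
  rewrite Htail.
  apply (lex_lt_trans _ _ _ Hdesc), flip_lex_lt; [exact Ha|]. now apply wminus_prefix_lt.
Qed.

End FirstFlipDescent.

Lemma not_irreducible_reduced_prefix M a :
  in_Omega M a -> (forall n, lex_le (shiftn n a) a) -> lex_le (qG_seq M) a -> ~ irreducible M a ->
  exists j, 0 < j /\ 0 < a (j - 1) /\ in_V M (periodic (wminus (prefix a j))) /\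
            lex_le a (alpha_qR M (wminus (prefix a j))).
Proof.
  intros Ha Hmax HqG Hirr. destruct (classic (in_V M a)) as [HV|HV].
  - apply NNPP. intros Hnone. apply Hirr. split; [exact HV|]. intros j Hj Hpos HVj.
    apply NNPP. intros Hnlt. apply Hnone. exists j. refine (conj Hj (conj Hpos (conj HVj _))).
    rewrite alpha_qR_wminus by (rewrite last_prefix by lia; split; [exact Hpos | apply Ha]).
    now apply not_lex_lt.
  - assert (Hex : exists n, lex_lt (shiftn n a) (flip M a)).
    { apply NNPP. intros Hnone. apply HV. split; [exact Ha|]. intros n. split; [|apply Hmax].
      apply not_lex_lt. intros Hlt. apply Hnone. now exists n. }
    destruct (least_witness _ Hex) as [n [Hdesc Hmin]].
    assert (Hmin' : forall i, i < n -> lex_le (flip M a) (shiftn i a)).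
    { intros i Hi. apply not_lex_lt, Hmin, Hi. }
    exists n. split; [|split; [|split]].
    + now apply (first_descent_pos M a n).
    + now apply (first_descent_last_pos M a n).
    + now apply (first_descent_in_V M a n).
    + left. now apply (first_descent_lt_alpha_qR M a n).
Qed.

Lemma not_irreducible_fundamental M a :
  in_Omega M a -> (forall n, lex_le (shiftn n a) a) -> lex_le (qG_seq M) a -> ~ irreducible M a ->
  exists b, fundamental M b /\ lex_lt (periodic b) a /\ lex_le a (alpha_qR M b).
Proof.
  intros Ha Hmax HqG Hirr.
  destruct (not_irreducible_reduced_prefix M a Ha Hmax HqG Hirr) as [j [Hj [Hpos [HV Hle]]]].
  exists (wminus (prefix a j)). split; [|split; [|exact Hle]].
  - now apply wminus_prefix_fundamental.
  - now apply wminus_prefix_lt.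
Qed.

(** * Values of expansions *)

Open Scope R_scope.

Definition term (q : R) (c : nat -> nat) (i : nat) : R := INR (c i) / q ^ S i.

Definition value (q : R) (c : nat -> nat) : R := Series (term q c).

Fixpoint partial_value (q : R) (c : nat -> nat) (n : nat) : R :=
  match n with O => 0 | S k => partial_value q c k + term q c k end.

Section Values.

Variables (M : nat) (q : R).
Hypothesis Hq : 1 < q.

Lemma term_nonneg c i : 0 <= term q c i.
Proof. apply Rdiv_le_0_compat; [apply pos_INR | apply pow_lt; lra]. Qed.

Lemma is_series_geom_digits :
  is_series (fun i => INR M * (/ q) ^ S i) (INR M / (q - 1)).
Proof.
  assert (Hinv : 0 < / q < 1)
    by (split; [apply Rinv_0_lt_compat | rewrite <- Rinv_1; apply Rinv_lt_contravar]; lra).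
  replace (INR M / (q - 1)) with (INR M / q * / (1 - / q)) by (field; lra).
  apply (is_series_ext (fun i => scal (INR M / q) ((/ q) ^ i))).
  - intros i. unfold scal; simpl. unfold mult; simpl. unfold Rdiv. ring.
  - apply (is_series_scal_l (K := R_AbsRing) (V := R_NormedModule)), is_series_geom.
    rewrite Rabs_pos_eq; lra.
Qed.

Lemma term_le_geom c i : in_Omega M c -> term q c i <= INR M * (/ q) ^ S i.
Proof.
  intros Hc. unfold term. rewrite pow_inv. apply Rmult_le_compat_r.
  - left. apply Rinv_0_lt_compat, pow_lt. lra.
  - apply le_INR, Hc.
Qed.

Lemma ex_series_term c : in_Omega M c -> ex_series (term q c).
Proof.
  intros Hc. apply (ex_series_le (K := R_AbsRing) (V := R_CompleteNormedModule)) with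
    (fun i => INR M * (/ q) ^ S i).
  - intros i. change (norm (term q c i)) with (Rabs (term q c i)).
    rewrite Rabs_pos_eq by apply term_nonneg. now apply term_le_geom.
  - eexists. apply is_series_geom_digits.
Qed.

Lemma value_le_bound c : in_Omega M c -> value q c <= INR M / (q - 1).
Proof.
  intros Hc. rewrite <- (is_series_unique _ _ is_series_geom_digits). apply Series_le.
  - intros i. split; [apply term_nonneg | now apply term_le_geom].
  - eexists. apply is_series_geom_digits.
Qed.

Lemma value_nonneg c : in_Omega M c -> 0 <= value q c.
Proof.
  intros Hc. unfold value. replace 0 with (0 * Series (term q c)) by ring.
  rewrite <- Series_scal_l. apply Series_le; [|now apply ex_series_term].
  intros i. rewrite Rmult_0_l. split; [lra | apply term_nonneg].
Qed.

Lemma value_shift1 c : in_Omega M c -> value q c = INR (c O) / q + value q (shiftn 1 c) / q.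
Proof.
  intros Hc. unfold value. rewrite Series_incr_1 by now apply ex_series_term.
  unfold term at 1. rewrite pow_1. f_equal.
  unfold Rdiv. rewrite Rmult_comm, <- Series_scal_l. apply Series_ext.
  intros n. unfold term, shiftn. simpl. field. split; [apply pow_nonzero|]; lra.
Qed.

Lemma value_shiftn c n :
  in_Omega M c -> value q c = partial_value q c n + value q (shiftn n c) / q ^ n.
Proof.
  intros Hc. induction n as [|n IH].
  - simpl. rewrite Rdiv_1_r, Rplus_0_l. reflexivity.
  - rewrite IH, (value_shift1 (shiftn n c)) by now apply shiftn_in_Omega.
    rewrite shiftn_shiftn, Nat.add_1_r. simpl partial_value. unfold term, shiftn.
    rewrite Nat.add_0_r. simpl pow. field. split; [apply pow_nonzero|]; lra.
Qed.

Lemma partial_value_nonneg c n : 0 <= partial_value q c n.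
Proof. induction n as [|n IH]; simpl; [lra|]. pose proof (term_nonneg c n). lra. Qed.

Lemma partial_value_mono c n m : (n <= m)%nat -> partial_value q c n <= partial_value q c m.
Proof.
  induction 1 as [|m _ IH]; [lra|]. simpl. pose proof (term_nonneg c m). lra.
Qed.

Lemma partial_value_agree_upto c d n :
  agree_upto n c d -> partial_value q c n = partial_value q d n.
Proof.
  induction n as [|n IH]; intros Hcd; [reflexivity|]. simpl. unfold term.
  rewrite IH by (intros i Hi; apply Hcd; lia). rewrite (Hcd n) by lia. reflexivity.
Qed.

Lemma partial_value_le_value c n : in_Omega M c -> partial_value q c n <= value q c.
Proof.
  intros Hc. rewrite (value_shiftn c n Hc).
  pose proof (value_nonneg (shiftn n c) (shiftn_in_Omega M n c Hc)).
  assert (0 < q ^ n) by (apply pow_lt; lra).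
  assert (0 <= value q (shiftn n c) / q ^ n) by (apply Rdiv_le_0_compat; lra). lra.
Qed.

Lemma value_pos c : in_Omega M c -> ~ ends_in_zero c -> 0 < value q c.
Proof.
  intros Hc Hz. destruct (not_ends_in_zero_pos c Hz 0) as [i [_ Hi]].
  apply (Rlt_le_trans _ (partial_value q c (S i))); [|now apply partial_value_le_value].
  simpl. pose proof (partial_value_nonneg c i).
  assert (0 < term q c i) by (apply Rdiv_lt_0_compat; [apply lt_0_INR; lia | apply pow_lt; lra]).
  lra.
Qed.

Lemma value_sub_agree_upto c d n :
  in_Omega M c -> in_Omega M d -> agree_upto n c d ->
  (value q d - value q c) * q ^ S n =
  INR (d n) - INR (c n) + value q (shiftn (S n) d) - value q (shiftn (S n) c).
Proof.
  intros Hc Hd Hcd. rewrite (value_shiftn c (S n) Hc), (value_shiftn d (S n) Hd).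
  simpl partial_value. rewrite (partial_value_agree_upto c d n Hcd). unfold term.
  field. apply pow_nonzero. lra.
Qed.

End Values.

Lemma value_le_of_base_le M q q' c : 1 < q -> q <= q' -> in_Omega M c -> value q' c <= value q c.
Proof.
  intros Hq Hqq' Hc. apply Series_le; [|now apply (ex_series_term M)].
  intros i. split; [apply term_nonneg; lra|]. unfold term, Rdiv.
  apply Rmult_le_compat_l; [apply pos_INR|].
  apply Rinv_le_contravar; [apply pow_lt; lra | apply pow_incr; lra].
Qed.

Lemma value_lt_of_base_lt M q q' c :
  1 < q -> q < q' -> in_Omega M c -> ~ ends_in_zero c -> value q' c < value q c.
Proof.
  intros Hq Hqq' Hc Hz. destruct (not_ends_in_zero_pos c Hz 0) as [i [_ Hi]].
  rewrite (value_shiftn M q ltac:(lra) c (S i) Hc), (value_shiftn M q' ltac:(lra) c (S i) Hc).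
  assert (Hpow : forall k, q ^ k <= q' ^ k) by (intros k; apply pow_incr; lra).
  assert (Hpart : forall n, partial_value q' c n <= partial_value q c n).
  { induction n as [|n IH]; simpl; [lra|]. enough (term q' c n <= term q c n) by lra.
    unfold term, Rdiv. apply Rmult_le_compat_l; [apply pos_INR|].
    apply Rinv_le_contravar; [apply pow_lt; lra | apply Hpow]. }
  assert (Hterm : term q' c i < term q c i).
  { unfold term, Rdiv. apply Rmult_lt_compat_l; [apply lt_0_INR; lia|].
    apply Rinv_lt_contravar; [apply Rmult_lt_0_compat; apply pow_lt; lra|].
    simpl. apply (Rle_lt_trans _ (q * q' ^ i)).
    - apply Rmult_le_compat_l; [lra | apply Hpow].
    - apply Rmult_lt_compat_r; [apply pow_lt; lra | exact Hqq']. }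
  assert (Htail : value q' (shiftn (S i) c) / q' ^ S i <= value q (shiftn (S i) c) / q ^ S i).
  { unfold Rdiv. apply Rmult_le_compat.
    - apply (value_nonneg M); [lra | now apply shiftn_in_Omega].
    - left. apply Rinv_0_lt_compat, pow_lt. lra.
    - apply (value_le_of_base_le M); [lra | lra | now apply shiftn_in_Omega].
    - apply Rinv_le_contravar; [apply pow_lt; lra | apply Hpow]. }
  simpl partial_value. specialize (Hpart i). lra.
Qed.

Lemma pow_unbounded q e B : 1 < q -> 0 < e -> exists n, B < q ^ n * e.
Proof.
  intros Hq He. destruct (INR_archimed ((q - 1) * e) B) as [n Hn]; [apply Rmult_lt_0_compat; lra|].
  exists n. pose proof (poly n (q - 1) ltac:(lra)) as Hbern.
  replace (1 + (q - 1)) with q in Hbern by ring.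
  assert (e * (1 + INR n * (q - 1)) <= e * q ^ n) by (apply Rmult_le_compat_l; lra). nra.
Qed.

Lemma eq_0_of_le_div_pow q z K : 1 < q -> (forall n, Rabs z <= K / q ^ n) -> z = 0.
Proof.
  intros Hq Hz. destruct (Req_dec z 0) as [E|E]; [exact E|]. exfalso.
  assert (Habs : 0 < Rabs z) by now apply Rabs_pos_lt.
  destruct (pow_unbounded q (Rabs z) K Hq Habs) as [n Hn]. specialize (Hz n).
  assert (0 < q ^ n) by (apply pow_lt; lra).
  apply Rmult_le_compat_r with (r := q ^ n) in Hz; [|lra].
  unfold Rdiv in Hz. rewrite Rmult_assoc, Rinv_l, Rmult_1_r in Hz by lra. lra.
Qed.

(** * Quasi-greedy expansions *)

(* [- up (- t)] is the largest integer strictly below [t]. *)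
Definition qg_digit (M : nat) (t : R) : nat := Nat.min M (Z.to_nat (- up (- t))).

Lemma up_opp_spec t : IZR (- up (- t)) < t <= IZR (- up (- t)) + 1.
Proof. destruct (archimed (- t)) as [H1 H2]. rewrite opp_IZR. lra. Qed.

Lemma INR_Z_to_nat_up_opp t : 0 < t -> INR (Z.to_nat (- up (- t))) = IZR (- up (- t)).
Proof.
  intros Ht. destruct (up_opp_spec t) as [H1 H2].
  assert (Hz : (0 <= - up (- t))%Z).
  { assert (Hlt : IZR (-1) < IZR (- up (- t))) by (simpl; lra). apply lt_IZR in Hlt. lia. }
  rewrite INR_IZR_INZ, Z2Nat.id by exact Hz. reflexivity.
Qed.

Lemma qg_digit_le M t : (qg_digit M t <= M)%nat.
Proof. apply Nat.le_min_l. Qed.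

Lemma qg_digit_lt M t : 0 < t -> INR (qg_digit M t) < t.
Proof.
  intros Ht. apply (Rle_lt_trans _ (IZR (- up (- t)))); [|apply up_opp_spec].
  rewrite <- INR_Z_to_nat_up_opp by exact Ht. apply le_INR, Nat.le_min_r.
Qed.

Lemma qg_digit_ge M t : 0 < t -> (qg_digit M t < M)%nat -> t <= INR (qg_digit M t) + 1.
Proof.
  intros Ht Hd. unfold qg_digit in *. rewrite Nat.min_r by lia.
  rewrite INR_Z_to_nat_up_opp by exact Ht. apply up_opp_spec.
Qed.

Lemma qg_digit_mono M t t' : 0 < t -> t <= t' -> (qg_digit M t <= qg_digit M t')%nat.
Proof.
  intros Ht Htt'. unfold qg_digit. apply Nat.min_le_compat_l, Z2Nat.inj_le.
  - apply le_IZR. rewrite <- INR_Z_to_nat_up_opp by exact Ht. apply pos_INR.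
  - apply le_IZR. rewrite <- INR_Z_to_nat_up_opp by lra. apply pos_INR.
  - destruct (up_opp_spec t), (up_opp_spec t').
    assert (Hlt : IZR (- up (- t)) < IZR (- up (- t') + 1)) by (rewrite plus_IZR; simpl; lra).
    apply lt_IZR in Hlt. lia.
Qed.

(* Taking digits strictly below [q r] keeps every remainder [r] in [(0, 1]], so the
   resulting expansion never ends in [0^oo]. *)
Fixpoint qg_rem (M : nat) (q x : R) (n : nat) : R :=
  match n with
  | O => x
  | S k => q * qg_rem M q x k - INR (qg_digit M (q * qg_rem M q x k))
  end.

Definition qg_seq (M : nat) (q x : R) (n : nat) : nat := qg_digit M (q * qg_rem M q x n).

Section QuasiGreedy.

Variables (M : nat) (q : R).
Hypothesis Hq : 1 < q <= INR M + 1.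

Lemma qg_seq_in_Omega x : in_Omega M (qg_seq M q x).
Proof. intros i. apply qg_digit_le. Qed.

Lemma qg_rem_bounds x n : 0 < x <= 1 -> 0 < qg_rem M q x n <= 1.
Proof.
  intros Hx. induction n as [|n IH]; simpl; [exact Hx|].
  set (t := q * qg_rem M q x n). assert (Ht : 0 < t <= q) by (unfold t; nra).
  pose proof (qg_digit_lt M t ltac:(lra)). split; [lra|].
  destruct (Nat.eq_dec (qg_digit M t) M) as [->|Hne]; [lra|].
  pose proof (qg_digit_ge M t ltac:(lra) ltac:(pose proof (qg_digit_le M t); lia)). lra.
Qed.

Lemma shiftn_qg_seq x n : shiftn n (qg_seq M q x) = qg_seq M q (qg_rem M q x n).
Proof.
  assert (Hrem : forall k, qg_rem M q x (n + k) = qg_rem M q (qg_rem M q x n) k).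
  { induction k as [|k IH]; [now rewrite Nat.add_0_r|]. rewrite Nat.add_succ_r. simpl.
    now rewrite IH. }
  apply functional_extensionality. intros k. unfold shiftn, qg_seq. now rewrite Hrem.
Qed.

Lemma qg_rem_partial_value x n : x = partial_value q (qg_seq M q x) n + qg_rem M q x n / q ^ n.
Proof.
  induction n as [|n IH]; [simpl; rewrite Rdiv_1_r; ring|].
  rewrite IH at 1. simpl partial_value. simpl qg_rem. unfold term, qg_seq. simpl pow.
  field. split; [apply pow_nonzero|]; lra.
Qed.

Lemma value_qg_seq x : 0 < x <= 1 -> value q (qg_seq M q x) = x.
Proof.
  intros Hx. symmetry.
  apply Rminus_diag_uniq, (eq_0_of_le_div_pow q _ (1 + INR M / (q - 1))); [lra|].
  intros n. rewrite (qg_rem_partial_value x n) at 1. set (d := qg_seq M q x).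
  assert (Hd : in_Omega M (shiftn n d)) by apply shiftn_in_Omega, qg_seq_in_Omega.
  rewrite (value_shiftn M q ltac:(lra) d n (qg_seq_in_Omega x)).
  pose proof (qg_rem_bounds x n Hx). pose proof (value_nonneg M q ltac:(lra) _ Hd).
  pose proof (value_le_bound M q ltac:(lra) _ Hd).
  assert (Hpow : 0 < q ^ n) by (apply pow_lt; lra).
  set (P := partial_value q d n). set (r := qg_rem M q x n) in *.
  set (v := value q (shiftn n d)) in *.
  replace (P + r / q ^ n - (P + v / q ^ n)) with ((r - v) / q ^ n) by (field; lra).
  rewrite Rabs_div by lra. rewrite (Rabs_pos_eq (q ^ n)) by lra. unfold Rdiv.
  apply Rmult_le_compat_r.
  - left. now apply Rinv_0_lt_compat.
  - apply Rabs_le.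
    assert (0 <= INR M / (q - 1)) by (apply Rdiv_le_0_compat; [apply pos_INR | lra]). lra.
Qed.

Lemma value_shiftn_qg_seq x n : 0 < x <= 1 -> value q (shiftn n (qg_seq M q x)) = qg_rem M q x n.
Proof. intros Hx. rewrite shiftn_qg_seq. now apply value_qg_seq, qg_rem_bounds. Qed.

Lemma qg_seq_not_ends_in_zero x : 0 < x <= 1 -> ~ ends_in_zero (qg_seq M q x).
Proof.
  intros Hx [N HN].
  assert (Hgrow : forall k, qg_rem M q x (N + k) = q ^ k * qg_rem M q x N).
  { induction k as [|k IH]; [rewrite Nat.add_0_r; simpl; ring|].
    rewrite Nat.add_succ_r. simpl qg_rem. rewrite IH.
    assert (Hzero := HN (N + k)%nat ltac:(lia)). unfold qg_seq in Hzero. rewrite IH in Hzero.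
    rewrite Hzero. simpl. ring. }
  pose proof (qg_rem_bounds x N Hx).
  destruct (pow_unbounded q (qg_rem M q x N) 1 ltac:(lra) ltac:(lra)) as [k Hk].
  pose proof (qg_rem_bounds x (N + k) Hx). rewrite Hgrow in *. lra.
Qed.

Lemma qg_seq_lt_value x b :
  0 < x <= 1 -> in_Omega M b -> ~ ends_in_zero b -> lex_lt (qg_seq M q x) b -> x < value q b.
Proof.
  intros Hx Hb Hz [n [Hagree Hlt]].
  pose proof (value_sub_agree_upto M q ltac:(lra) _ b n (qg_seq_in_Omega x) Hb Hagree) as Hdiff.
  rewrite value_qg_seq, value_shiftn_qg_seq in Hdiff by exact Hx.
  pose proof (qg_rem_bounds x (S n) Hx).
  assert (Hpos : 0 < value q (shiftn (S n) b)).
  { apply (value_pos M); [lra | now apply shiftn_in_Omega |].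
    now rewrite ends_in_zero_shiftn. }
  assert (Hdigit : INR (qg_seq M q x n) + 1 <= INR (b n)) by (rewrite <- S_INR; apply le_INR; lia).
  assert (Hpow : 0 < q ^ S n) by (apply pow_lt; lra).
  assert (Hprod : 0 < (value q b - x) * q ^ S n) by lra.
  apply Rmult_lt_reg_r with (q ^ S n); [exact Hpow|]. nra.
Qed.

Lemma qg_seq_mono x y : 0 < x <= 1 -> 0 < y <= 1 -> x <= y -> lex_le (qg_seq M q x) (qg_seq M q y).
Proof.
  intros Hx Hy Hxy. apply not_lex_lt. intros [n [Hagree Hlt]].
  assert (Hrem : forall k, (k <= n)%nat -> qg_rem M q y k - qg_rem M q x k = q ^ k * (y - x)).
  { induction k as [|k IH]; intros Hk; [simpl; ring|]. simpl qg_rem.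
    assert (E := Hagree k ltac:(lia)). unfold qg_seq in E. rewrite E.
    transitivity (q * (qg_rem M q y k - qg_rem M q x k)); [ring|]. rewrite IH by lia. simpl. ring. }
  specialize (Hrem n (le_n n)). pose proof (qg_rem_bounds x n Hx).
  pose proof (qg_rem_bounds y n Hy).
  assert (0 < q ^ n) by (apply pow_lt; lra).
  assert (qg_rem M q x n <= qg_rem M q y n) by nra.
  assert (qg_digit M (q * qg_rem M q x n) <= qg_digit M (q * qg_rem M q y n))%nat
    by (apply qg_digit_mono; nra).
  unfold qg_seq in Hlt. lia.
Qed.

End QuasiGreedy.

Lemma value_of_infinite_sum M q c l :
  1 < q -> in_Omega M c -> infinite_sum (fun i => INR (c i) / q ^ S i) l -> value q c = l.
Proof. intros Hq Hc Hl. now apply is_series_unique, is_series_Reals. Qed.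

Lemma alpha_qg_seq M q : 1 < q <= INR M + 1 -> is_alpha M q (qg_seq M q 1).
Proof.
  intros Hq. refine (conj Hq (conj (qg_seq_in_Omega M q 1) (conj _ (conj _ _)))).
  - apply qg_seq_not_ends_in_zero; [exact Hq | lra].
  - assert (Hsum : infinite_sum (fun i => INR (qg_seq M q 1 i) / q ^ S i) (value q (qg_seq M q 1))).
    { apply is_series_Reals, Series_correct, (ex_series_term M); [lra | apply qg_seq_in_Omega]. }
    now rewrite value_qg_seq in Hsum by lra.
  - intros b Hb Hz Hsum. apply not_lex_lt. intros Hlt.
    pose proof (qg_seq_lt_value M q Hq 1 b ltac:(lra) Hb Hz Hlt).
    rewrite (value_of_infinite_sum M q b 1) in * by (auto; lra). lra.
Qed.

Lemma alpha_unique M q a a' : is_alpha M q a -> is_alpha M q a' -> a = a'.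
Proof.
  intros (_ & Ha & Hz & Hs & Hmax) (_ & Ha' & Hz' & Hs' & Hmax'). apply lex_le_antisym; auto.
Qed.

Lemma alpha_eq_qg_seq M q a : is_alpha M q a -> a = qg_seq M q 1.
Proof. intros Ha. apply (alpha_unique M q); [exact Ha | apply alpha_qg_seq, Ha]. Qed.

Lemma alpha_value M q a : is_alpha M q a -> value q a = 1.
Proof. intros (Hq & Ha & _ & Hs & _). apply (value_of_infinite_sum M); auto; lra. Qed.

Lemma alpha_shiftn_le M q a : is_alpha M q a -> forall n, lex_le (shiftn n a) a.
Proof.
  intros Ha n. rewrite (alpha_eq_qg_seq M q a Ha), shiftn_qg_seq. destruct Ha as [Hq _].
  apply qg_seq_mono; [exact Hq | | lra |]; apply qg_rem_bounds; [exact Hq | lra | exact Hq | lra].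
Qed.

Lemma alpha_lt_of_lt M q1 q2 a1 a2 :
  is_alpha M q1 a1 -> is_alpha M q2 a2 -> q1 < q2 -> lex_lt a1 a2.
Proof.
  intros Ha1 Ha2 Hlt. apply NNPP. intros Hnlt. apply not_lex_lt in Hnlt.
  pose proof (alpha_value M q1 a1 Ha1) as V1. pose proof (alpha_value M q2 a2 Ha2) as V2.
  pose proof (alpha_eq_qg_seq M q2 a2 Ha2) as E2.
  destruct Ha1 as (Hq1 & Ha1 & Hz1 & _). destruct Ha2 as (Hq2 & _).
  assert (Hbase : value q2 a1 < value q1 a1) by (apply (value_lt_of_base_lt M); auto; lra).
  apply lex_le_eq_or_lt in Hnlt as [Hlt'|Heq].
  - rewrite E2 in Hlt'. pose proof (qg_seq_lt_value M q2 Hq2 1 a1 ltac:(lra) Ha1 Hz1 Hlt'). lra.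
  - subst a2. lra.
Qed.

Lemma alpha_lt_iff M q1 q2 a1 a2 : is_alpha M q1 a1 -> is_alpha M q2 a2 -> q1 < q2 <-> lex_lt a1 a2.
Proof.
  intros Ha1 Ha2. split; [now apply (alpha_lt_of_lt M)|]. intros Hlt.
  destruct (Rlt_le_dec q1 q2) as [Hq|Hq]; [exact Hq|]. exfalso. destruct Hq as [Hq| ->].
  - exact (lex_lt_not_le _ _ Hlt (or_introl (alpha_lt_of_lt M q2 q1 a2 a1 Ha2 Ha1 Hq))).
  - rewrite (alpha_unique M q1 a1 a2 Ha1 Ha2) in Hlt. exact (lex_lt_irrefl _ Hlt).
Qed.

Lemma alpha_le_iff M q1 q2 a1 a2 :
  is_alpha M q1 a1 -> is_alpha M q2 a2 -> q1 <= q2 <-> lex_le a1 a2.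
Proof.
  intros Ha1 Ha2. rewrite lex_le_iff_not_lex_lt, <- (alpha_lt_iff M q2 q1 a2 a1 Ha2 Ha1). lra.
Qed.

(** * Parry's criterion *)

Lemma value_shiftn_le_1 M q c :
  1 < q -> in_Omega M c -> (forall n, lex_le (shiftn n c) c) -> value q c = 1 ->
  forall n, value q (shiftn n c) <= 1.
Proof.
  intros Hq Hc Hmax Hv.
  (* a tail of value [1 + e] forces a later tail of value at least [1 + q e] *)
  assert (Hstep : forall n, 1 < value q (shiftn n c) ->
            exists n', q * (value q (shiftn n c) - 1) <= value q (shiftn n' c) - 1).
  { intros n Hn. destruct (proj1 (lex_le_eq_or_lt _ _) (Hmax n)) as [[k [Hagree Hlt]]|Heq];
      [|rewrite Heq in Hn; lra].
    exists (n + S k)%nat.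
    pose proof (value_sub_agree_upto M q Hq _ _ k (shiftn_in_Omega M n c Hc) Hc Hagree) as Hdiff.
    rewrite shiftn_shiftn, Hv in Hdiff.
    assert (0 <= value q (shiftn (S k) c))
      by (apply (value_nonneg M); [lra | now apply shiftn_in_Omega]).
    assert (INR (shiftn n c k) + 1 <= INR (c k)) by (rewrite <- S_INR; apply le_INR; lia).
    assert (q <= q ^ S k) by (rewrite <- (pow_1 q) at 1; apply Rle_pow; [lra | lia]).
    assert (q * (value q (shiftn n c) - 1) <= q ^ S k * (value q (shiftn n c) - 1))
      by (apply Rmult_le_compat_r; lra).
    nra. }
  intros n. apply Rnot_lt_le. intros Hn. set (e := value q (shiftn n c) - 1).
  assert (Hgrow : forall j, exists n', q ^ j * e <= value q (shiftn n' c) - 1).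
  { induction j as [|j [n' Hn']]; [exists n; simpl; unfold e; lra|].
    assert (0 < q ^ j * e) by (apply Rmult_lt_0_compat; [apply pow_lt | unfold e]; lra).
    destruct (Hstep n' ltac:(lra)) as [n'' Hn'']. exists n''. simpl. nra. }
  destruct (pow_unbounded q e (INR M / (q - 1)) Hq ltac:(unfold e; lra)) as [j Hj].
  destruct (Hgrow j) as [n' Hn'].
  pose proof (value_le_bound M q Hq (shiftn n' c) (shiftn_in_Omega M n' c Hc)).
  assert (0 <= INR M / (q - 1)) by (apply Rdiv_le_0_compat; [apply pos_INR | lra]). lra.
Qed.

Lemma quasi_greedy_alpha M q c :
  1 < q <= INR M + 1 -> quasi_greedy M c -> value q c = 1 -> is_alpha M q c.
Proof.
  intros Hq (Hc & Hz & Hmax) Hv. set (d := qg_seq M q 1).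
  enough (Hcd : c = d) by (rewrite Hcd; now apply alpha_qg_seq).
  apply lex_le_antisym.
  - apply (alpha_qg_seq M q Hq); [exact Hc | exact Hz|]. rewrite <- Hv.
    apply is_series_Reals, Series_correct, (ex_series_term M); [lra | exact Hc].
  - apply not_lex_lt. intros [n [Hagree Hlt]]. unfold d in *.
    pose proof (value_sub_agree_upto M q ltac:(lra) _ _ n Hc (qg_seq_in_Omega M q 1) Hagree)
      as Hdiff.
    rewrite value_qg_seq, Hv in Hdiff by (auto; lra).
    assert (value q (shiftn (S n) c) <= 1) by (apply (value_shiftn_le_1 M); auto; lra).
    assert (0 < value q (shiftn (S n) (qg_seq M q 1))).
    { rewrite value_shiftn_qg_seq by (auto; lra). apply qg_rem_bounds; auto; lra. }
    assert (INR (c n) + 1 <= INR (qg_seq M q 1 n)) by (rewrite <- S_INR; apply le_INR; lia).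
    rewrite Rminus_diag, Rmult_0_l in Hdiff. lra.
Qed.

Lemma pow_one_sub_ge y n : 0 <= y <= 1 -> 1 - INR n * y <= (1 - y) ^ n.
Proof.
  intros Hy. induction n as [|n IH]; [simpl; lra|]. rewrite S_INR. simpl.
  assert (0 <= INR n) by apply pos_INR.
  assert ((1 - y) * (1 - INR n * y) <= (1 - y) * (1 - y) ^ n) by (apply Rmult_le_compat_l; lra).
  nra.
Qed.

Lemma value_gt_1_near_1 M c : in_Omega M c -> ~ ends_in_zero c -> exists q, 1 < q /\ 1 < value q c.
Proof.
  intros Hc Hz. destruct (not_ends_in_zero_pos c Hz 0) as [i1 [_ H1]].
  destruct (not_ends_in_zero_pos c Hz (S i1)) as [i2 [Hi12 H2]].
  set (N := S i2). set (y := / (4 * INR N)).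
  assert (HN : 0 < INR N) by (apply lt_0_INR; unfold N; lia).
  assert (Hy : 0 < y <= / 4).
  { unfold y. split; [apply Rinv_0_lt_compat; lra|]. apply Rinv_le_contravar; [lra|].
    assert (1 <= INR N) by (apply (le_INR 1); unfold N; lia). lra. }
  exists (/ (1 - y)). split; [rewrite <- Rinv_1; apply Rinv_lt_contravar; lra|].
  (* every nonzero digit among the first [N] contributes at least [3/4] *)
  assert (Hterm : forall i, (0 < c i)%nat -> (i < N)%nat -> 3 / 4 <= term (/ (1 - y)) c i).
  { intros i Hi HiN. unfold term, Rdiv. rewrite pow_inv, Rinv_inv.
    assert (1 <= INR (c i)) by (apply (le_INR 1); lia).
    assert (Hpow : 1 - INR (S i) * y <= (1 - y) ^ S i) by (apply pow_one_sub_ge; lra).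
    assert (INR (S i) * y <= INR N * y)
      by (apply Rmult_le_compat_r; [lra | apply le_INR; unfold N; lia]).
    assert (INR N * y = / 4) by (unfold y; field; lra).
    assert (0 <= (1 - y) ^ S i) by (apply pow_le; lra). nra. }
  assert (Hq : 1 < / (1 - y)) by (rewrite <- Rinv_1; apply Rinv_lt_contravar; lra).
  apply (Rlt_le_trans _ (partial_value (/ (1 - y)) c N)); [|apply (partial_value_le_value M); auto].
  assert (Hmono : partial_value (/ (1 - y)) c (S i1) <= partial_value (/ (1 - y)) c i2).
  { apply partial_value_mono; [exact Hq | exact Hi12]. }
  pose proof (partial_value_nonneg (/ (1 - y)) Hq c i1).
  pose proof (Hterm i1 H1 ltac:(unfold N; lia)). pose proof (Hterm i2 H2 ltac:(unfold N; lia)).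
  unfold N. simpl partial_value at 1. simpl partial_value in Hmono. lra.
Qed.

(* [value (/ x) c] as a power series in [x], so that continuity in the base is available. *)
Definition series_coef (c : nat -> nat) (n : nat) : R :=
  match n with O => 0 | S k => INR (c k) end.

Lemma PSeries_series_coef c x : 0 < x -> PSeries (series_coef c) x = value (/ x) c.
Proof.
  intros Hx. unfold PSeries, value. rewrite Series_incr_1_aux by (simpl; ring).
  apply Series_ext. intros k. unfold term. simpl series_coef. rewrite pow_inv.
  field. apply pow_nonzero. lra.
Qed.

Lemma CV_radius_series_coef M c :
  in_Omega M c -> forall x, Rabs x < 1 -> Rbar_lt (Rabs x) (CV_radius (series_coef c)).
Proof.
  intros Hc x Hx. set (r := (Rabs x + 1) / 2).
  assert (Hr : 0 <= r < 1) by (unfold r; pose proof (Rabs_pos x); lra).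
  assert (Hdisk : CV_disk (series_coef c) r).
  { apply (ex_series_le (K := R_AbsRing) (V := R_CompleteNormedModule))
      with (fun n => INR M * r ^ n).
    - intros n.
      change (norm (Rabs (series_coef c n * r ^ n))) with (Rabs (Rabs (series_coef c n * r ^ n))).
      rewrite Rabs_Rabsolu, Rabs_mult, (Rabs_pos_eq (r ^ n)) by (apply pow_le; lra).
      apply Rmult_le_compat_r; [apply pow_le; lra|].
      destruct n; simpl; [rewrite Rabs_R0; apply pos_INR|].
      rewrite Rabs_pos_eq by apply pos_INR. apply le_INR, Hc.
    - apply (ex_series_ext (fun i => scal (INR M) (r ^ i))); [reflexivity|].
      apply (ex_series_scal_l (K := R_AbsRing) (V := R_NormedModule)), ex_series_geom.
      rewrite Rabs_pos_eq; lra. }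
  destruct (Lub_Rbar_correct (CV_disk (series_coef c))) as [Hub _].
  specialize (Hub r Hdisk). unfold CV_radius.
  destruct (Lub_Rbar (CV_disk (series_coef c))); simpl in *; auto. unfold r in Hub. lra.
Qed.

Lemma exists_base_value_1 M c :
  (1 <= M)%nat -> in_Omega M c -> ~ ends_in_zero c -> exists q, 1 < q <= INR M + 1 /\ value q c = 1.
Proof.
  intros HM Hc Hz. assert (HM' : 1 <= INR M) by (apply (le_INR 1); exact HM).
  assert (Htop : value (INR M + 1) c <= 1).
  { eapply Rle_trans; [apply (value_le_bound M); [lra | exact Hc]|]. right. field. lra. }
  destruct Htop as [Htop|Htop]; [|exists (INR M + 1); split; [lra | exact Htop]].
  destruct (value_gt_1_near_1 M c Hc Hz) as [q1 [Hq1 Hv1]].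
  assert (Hq1M : q1 < INR M + 1).
  { apply Rnot_le_lt. intros Hle.
    pose proof (value_le_of_base_le M (INR M + 1) q1 c ltac:(lra) Hle Hc). lra. }
  set (f := fun x => PSeries (series_coef c) x - 1).
  assert (Hinv : 0 < / (INR M + 1) < / q1 /\ / q1 < 1).
  { split; [split; [apply Rinv_0_lt_compat; lra | apply Rinv_lt_contravar; nra]|].
    rewrite <- Rinv_1. apply Rinv_lt_contravar; lra. }
  destruct (Ranalysis5.IVT_interv f (/ (INR M + 1)) (/ q1)) as [z [Hz1 Hz2]].
  - intros x Hx. unfold f.
    apply continuity_pt_minus; [|apply continuity_pt_const; intros u v; reflexivity].
    apply PSeries_continuity, (CV_radius_series_coef M); [exact Hc|]. rewrite Rabs_pos_eq; lra.
  - lra.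
  - unfold f. rewrite PSeries_series_coef, Rinv_inv by lra. lra.
  - unfold f. rewrite PSeries_series_coef, Rinv_inv by lra. lra.
  - exists (/ z). unfold f in Hz2. rewrite PSeries_series_coef in Hz2 by lra. split; [|lra]. split.
    + rewrite <- Rinv_1. apply Rinv_lt_contravar; lra.
    + rewrite <- (Rinv_inv (INR M + 1)). apply Rinv_le_contravar; lra.
Qed.

Lemma quasi_greedy_is_alpha M c : (1 <= M)%nat -> quasi_greedy M c -> exists q, is_alpha M q c.
Proof.
  intros HM Hqg. pose proof Hqg as (Hc & Hz & _).
  destruct (exists_base_value_1 M c HM Hc Hz) as [q [Hq Hv]].
  exists q. now apply quasi_greedy_alpha.
Qed.

Theorem lemma2p18 (M : nat) (HM : (1 <= M)%nat) (qG q : R)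
  (HqG : is_alpha M qG (qG_seq M)) (Hq : qG <= q <= INR M + 1)
  (a : nat -> nat) (Ha : is_alpha M q a) :
  irreducible M a <->
  (forall b, fundamental M b ->
     forall qL qR, is_alpha M qL (periodic b) ->
       is_alpha M qR (word_then_periodic (wplus b) (wflip M b)) ->
       ~ (qL < q <= qR)).
Proof.
  assert (Ha_Omega : in_Omega M a) by apply Ha.
  pose proof (alpha_shiftn_le M q a Ha) as Hmax.
  assert (HqG_a : lex_le (qG_seq M) a) by (apply (alpha_le_iff M qG q); auto; lra).
  split.
  - intros Hirr b Hfund qL qR HL HR [HLq HqR].
    apply (alpha_lt_iff M qL q _ a HL Ha) in HLq. apply (alpha_le_iff M q qR a _ Ha HR) in HqR.
    exact (lex_lt_not_le _ _ (irreducible_alpha_qR_lt M a b Hmax Hirr Hfund HLq) HqR).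
  - intros Hnone. apply NNPP. intros Hirr.
    destruct (not_irreducible_fundamental M a Ha_Omega Hmax HqG_a Hirr) as [b [Hfund [Hba Hab]]].
    destruct (fundamental_quasi_greedy M b Hfund) as [HqgL HqgR].
    destruct (quasi_greedy_is_alpha M _ HM HqgL) as [qL HL].
    destruct (quasi_greedy_is_alpha M _ HM HqgR) as [qR HR].
    apply (Hnone b Hfund qL qR HL HR). split.
    + now apply (alpha_lt_iff M qL q _ a HL Ha).
    + now apply (alpha_le_iff M q qR a _ Ha HR).
Qed.
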